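(* Let $0<s<1/2$ and $\beta:=2s-\tfrac32$. There is $C=C(s)$ such that for every $T>0$, every $\omega\in C([0,T];\ell^2_s(\mathbb Z))$ and every $t\in[0,T]$, $$\|\mathcal N[\omega](t)\|_{\ell^2_\beta}\le C\|\omega(t)\|_{\ell^2_s}^3 .$$
   Context: $\langle n\rangle=(1+n^2)^{1/2}$; $\ell^2_s(\mathbb Z)$ is the space of $\omega:\mathbb Z\to\mathbb C$ with $\|\omega\|_{\ell^2_s}:=\|\langle\cdot\rangle^s\omega\|_{\ell^2}<\infty$. For $\omega$ set $\omega^*(n):=\overline{\omega(-n)}$. Write $n_{ij\ldots}=n_i+n_j+\cdots$, $\hat n:=n-i\mathbf 1_{\{n=0\}}$. For integers with $n=n_{123}$ define $m_1:=2i\frac{n n_{23}}{\hat n_1\hat n_2}\mathbf 1_{\{n>0\}}\mathbf 1_{\{n_{23}<0\}}\mathbf 1_{\{n_3\neq0\}}$, $m_2:=2i\frac{n n_{23}}{\hat n_1\hat n_2}\mathbf 1_{\{n<0\}}\mathbf 1_{\{n_{23}>0\}}\mathbf 1_{\{n_3\neq0\}}$, $m_3:=2i\frac{n}{\hat n_1}\mathbf 1_{\{n<0\}}\mathbf 1_{\{n_2n_3\neq0\}}$ (all functions of $(n,n_1,n_2,n_3)$), $\tilde m_1:=m_1\mathbf 1_{\{n_{12}n_{13}\neq0\}}$, and $\Phi:=n|n|-n_1|n_1|-n_2|n_2|-n_3|n_3|$. For $\omega:[0,T]\to\ell^2_s$ and $t\in[0,T]$, $n\in\mathbb Z$, $$\mathcal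 N[\omega](t,n):=\sum_{n=n_{123}}e^{it\Phi}\big[\tilde m_1\,\omega(t,n_1)\omega(t,n_2)\omega^*(t,n_3)+m_2\,\omega(t,n_1)\omega^*(t,n_2)\omega(t,n_3)+m_3\,\omega^*(t,n_1)\omega(t,n_2)\omega(t,n_3)\big],$$ the sum being over $(n_1,n_2,n_3)\in\mathbb Z^3$ with $n_1+n_2+n_3=n$. *)

From Stdlib Require Import Reals ZArith Lra.
Open Scope R_scope.

Definition Cplx := (R * R)%type.
Definition Cre (z : Cplx) : R := fst z.
Definition Cim (z : Cplx) : R := snd z.
Definition C0 : Cplx := (0, 0).
Definition CofR (x : R) : Cplx := (x, 0).
Definition Ci : Cplx := (0, 1).
Definition Cadd (z w : Cplx) : Cplx := (Cre z + Cre w, Cim z + Cim w).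
Definition Copp (z : Cplx) : Cplx := (- Cre z, - Cim z).
Definition Csub (z w : Cplx) : Cplx := Cadd z (Copp w).
Definition Cmul (z w : Cplx) : Cplx :=
  (Cre z * Cre w - Cim z * Cim w, Cre z * Cim w + Cim z * Cre w).
Definition Cnorm2 (z : Cplx) : R := Cre z ^ 2 + Cim z ^ 2.
Definition Cconj (z : Cplx) : Cplx := (Cre z, - Cim z).
Definition Cinv (z : Cplx) : Cplx := (Cre z / Cnorm2 z, - Cim z / Cnorm2 z).
Definition Cdiv (z w : Cplx) : Cplx := Cmul z (Cinv w).
Definition Cexpi (x : R) : Cplx := (cos x, sin x).

(** Convergence of a complex sequence (componentwise = in modulus). *)
Definition Ccv (u : nat -> Cplx) (v : Cplx) : Prop :=
  Un_cv (fun k => Cre (u k)) (Cre v) /\ Un_cv (fun k => Cim (u k)) (Cim v).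

Fixpoint sum_nat_R (m : nat) (f : nat -> R) : R :=
  match m with O => 0 | S m' => sum_nat_R m' f + f m' end.
Fixpoint sum_nat_C (m : nat) (f : nat -> Cplx) : Cplx :=
  match m with O => C0 | S m' => Cadd (sum_nat_C m' f) (f m') end.

Definition sumZ_R (K : nat) (f : Z -> R) : R :=
  sum_nat_R (2 * K + 1) (fun j => f (Z.of_nat j - Z.of_nat K)%Z).
Definition sumZ_C (K : nat) (f : Z -> Cplx) : Cplx :=
  sum_nat_C (2 * K + 1) (fun j => f (Z.of_nat j - Z.of_nat K)%Z).

Definition jbr (n : Z) : R := sqrt (1 + IZR n ^ 2).

Definition l2sq_partial (s : R) (w : Z -> Cplx) (K : nat) : R :=
  sumZ_R K (fun n => Rpower (jbr n) (2 * s) * Cnorm2 (w n)).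

(** w in l^2_s, with  ||w||_{l^2_s}^2 = L *)
Definition l2sq_is (s : R) (w : Z -> Cplx) (L : R) : Prop :=
  Un_cv (l2sq_partial s w) L.
Definition in_l2 (s : R) (w : Z -> Cplx) : Prop := exists L, l2sq_is s w L.

Definition star (w : Z -> Cplx) (n : Z) : Cplx := Cconj (w (- n)%Z).

Definition ind (b : bool) : R := if b then 1 else 0.
Definition hatZ (n : Z) : Cplx := (IZR n, - ind (Z.eqb n 0)).

Definition m1 (n n1 n2 n3 : Z) : Cplx :=
  Cmul (CofR (ind (Z.ltb 0 n) * ind (Z.ltb (n2 + n3) 0) * ind (negb (Z.eqb n3 0))))
    (Cdiv (Cmul (CofR 2) (Cmul Ci (CofR (IZR n * IZR (n2 + n3)))))
          (Cmul (hatZ n1) (hatZ n2))).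
Definition m2 (n n1 n2 n3 : Z) : Cplx :=
  Cmul (CofR (ind (Z.ltb n 0) * ind (Z.ltb 0 (n2 + n3)) * ind (negb (Z.eqb n3 0))))
    (Cdiv (Cmul (CofR 2) (Cmul Ci (CofR (IZR n * IZR (n2 + n3)))))
          (Cmul (hatZ n1) (hatZ n2))).
Definition m3 (n n1 n2 n3 : Z) : Cplx :=
  Cmul (CofR (ind (Z.ltb n 0) * ind (negb (Z.eqb (n2 * n3) 0))))
    (Cdiv (Cmul (CofR 2) (Cmul Ci (CofR (IZR n)))) (hatZ n1)).
Definition m1t (n n1 n2 n3 : Z) : Cplx :=
  Cmul (CofR (ind (negb (Z.eqb ((n1 + n2) * (n1 + n3)) 0)))) (m1 n n1 n2 n3).

Definition Phi (n n1 n2 n3 : Z) : Z :=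
  (n * Z.abs n - n1 * Z.abs n1 - n2 * Z.abs n2 - n3 * Z.abs n3)%Z.

Definition Nterm (w : Z -> Cplx) (t : R) (n n1 n2 : Z) : Cplx :=
  let n3 := (n - n1 - n2)%Z in
  Cmul (Cexpi (t * IZR (Phi n n1 n2 n3)))
    (Cadd (Cmul (m1t n n1 n2 n3) (Cmul (w n1) (Cmul (w n2) (star w n3))))
    (Cadd (Cmul (m2 n n1 n2 n3) (Cmul (w n1) (Cmul (star w n2) (w n3))))
          (Cmul (m3 n n1 n2 n3) (Cmul (star w n1) (Cmul (w n2) (w n3)))))).

(** Square partial sums of the series over {n1+n2+n3 = n}, i.e. over
    (n1,n2) in [-K,K]^2. *)
Definition Npartial (w : Z -> Cplx) (t : R) (n : Z) (K : nat) : Cplx :=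
  sumZ_C K (fun n1 => sumZ_C K (fun n2 => Nterm w t n n1 n2)).

Definition Nval (w : Z -> Cplx) (t : R) (n : Z) (v : Cplx) : Prop :=
  Ccv (Npartial w t n) v.

(* Each multiplier is bounded by a multiple of [|n| / <n_1>] or [|n| / <n_2>], so
   [|N[ω](n)| <= C |n| (Q(x, x, x~)(n) + 2 Q(x~, x, x)(n))], where [x = |ω|], [x~ = |ω(- .)|] and
   [Q(x, y, z)(n) = Σ_{a + c + m = n} x_a y_c z_m / <a>]. As [<n>^(2β) n^2 <= <n>^(4s-1)], it
   suffices to bound [Σ_n <n>^(4s-1) Q(n)^2] by [E^3] when [x, y, z] have [l^2_s] norm squared
   at most [E]. By symmetry in [y, z] one may assume [|c| <= |m|]; Cauchy-Schwarz with the weights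
   [<a>^(2s) <c>^(2s)] and the substitution [m = n - a - c] then reduce everything to the kernel
   bound [sup_q Σ_{a, |p| <= |q|} <a+p+q>^(4s-1) <a>^(-2-2s) <p>^(-2s) <q>^(-2s) < ∞]. It follows
   from Peetre's inequality, the summability of [<a>^(-1-2s)] and [Σ_{|p| <= N} <p>^σ <~ <N>^(1+σ)]
   for [σ = -2s] and [σ = 4s - 1], which all need [0 < s < 1/2]. The same bounds give absolute
   convergence of the series defining [N[ω](n)] over square windows. *)

From Pilot Require Import Defs.
From Stdlib Require Import Reals ZArith Lra Lia Psatz.
Open Scope R_scope.

(** * Finite sums over integer windows *)

Lemma sum_nat_R_S m f : sum_nat_R (S m) f = sum_nat_R m f + f m.
Proof. reflexivity. Qed.

Lemma sum_nat_R_ext m f g :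
  (forall j, (j < m)%nat -> f j = g j) -> sum_nat_R m f = sum_nat_R m g.
Proof. induction m; intros H; simpl; auto. rewrite IHm, H; auto. Qed.

Lemma sum_nat_R_le m f g :
  (forall j, (j < m)%nat -> f j <= g j) -> sum_nat_R m f <= sum_nat_R m g.
Proof.
  induction m; intros H; simpl; [lra|].
  assert (f m <= g m) by (apply H; lia).
  assert (sum_nat_R m f <= sum_nat_R m g) by (apply IHm; intros; apply H; lia). lra.
Qed.

Lemma sum_nat_R_plus m f g :
  sum_nat_R m (fun j => f j + g j) = sum_nat_R m f + sum_nat_R m g.
Proof. induction m; simpl; lra. Qed.

Lemma sum_nat_R_scal m c f : sum_nat_R m (fun j => c * f j) = c * sum_nat_R m f.
Proof. induction m; simpl; [lra|]. rewrite IHm; ring. Qed.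

Lemma sum_nat_R_nonneg m f : (forall j, (j < m)%nat -> 0 <= f j) -> 0 <= sum_nat_R m f.
Proof.
  intros H. replace 0 with (sum_nat_R m (fun _ => 0)) by (clear H; induction m; simpl; lra).
  now apply sum_nat_R_le.
Qed.

Lemma sum_nat_R_const_le m f c :
  (forall j, (j < m)%nat -> f j <= c) -> sum_nat_R m f <= INR m * c.
Proof.
  induction m; intros H; [simpl; lra|]. rewrite sum_nat_R_S, S_INR.
  assert (f m <= c) by (apply H; lia).
  assert (sum_nat_R m f <= INR m * c) by (apply IHm; intros; apply H; lia). lra.
Qed.

Lemma sum_nat_R_cons m f : sum_nat_R (S m) f = f 0%nat + sum_nat_R m (fun j => f (S j)).
Proof. induction m; simpl; [lra|]. simpl in IHm. rewrite IHm. ring. Qed.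

Lemma sum_nat_R_swap m k F :
  sum_nat_R m (fun a => sum_nat_R k (F a)) = sum_nat_R k (fun b => sum_nat_R m (fun a => F a b)).
Proof.
  induction m; simpl.
  - induction k; simpl; lra.
  - rewrite IHm, <- sum_nat_R_plus. reflexivity.
Qed.

Lemma sum_nat_R_abs m f : Rabs (sum_nat_R m f) <= sum_nat_R m (fun j => Rabs (f j)).
Proof. induction m; simpl. rewrite Rabs_R0; lra. eapply Rle_trans; [apply Rabs_triang|lra]. Qed.

Lemma sum_nat_R_Cauchy_Schwarz m t A B :
  (forall j, 0 <= A j) -> (forall j, 0 <= B j) -> (forall j, t j ^ 2 <= A j * B j) ->
  sum_nat_R m t ^ 2 <= sum_nat_R m A * sum_nat_R m B.
Proof.
  intros HA HB Ht. induction m; [simpl; lra|]. rewrite !sum_nat_R_S.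
  set (S0 := sum_nat_R m t) in *. set (P := sum_nat_R m A) in *. set (Q := sum_nat_R m B) in *.
  assert (HP : 0 <= P) by (apply sum_nat_R_nonneg; auto).
  assert (HQ : 0 <= Q) by (apply sum_nat_R_nonneg; auto).
  specialize (HA m); specialize (HB m); specialize (Ht m).
  (* the cross term: (2 S0 t)^2 <= 4 P Q A B <= (P B + A Q)^2 *)
  assert (Hcross : 2 * S0 * t m <= P * B m + A m * Q).
  { assert (4 * S0 ^ 2 * t m ^ 2 <= 4 * (P * Q) * (A m * B m)).
    { apply Rmult_le_compat; nra. }
    assert (0 <= (P * B m - A m * Q) ^ 2) by apply pow2_ge_0.
    assert ((2 * S0 * t m) ^ 2 <= (P * B m + A m * Q) ^ 2) by nra.
    apply Rsqr_incr_0_var; unfold Rsqr; nra. }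
  nra.
Qed.

Lemma sum_nat_R_le_length m M f : (forall j, 0 <= f j) -> (m <= M)%nat ->
  sum_nat_R m f <= sum_nat_R M f.
Proof. intros Hf H. induction H; [lra|]. simpl. specialize (Hf m0). lra. Qed.

Lemma sum_nat_R_shift_le m d g : (forall j, 0 <= g j) ->
  sum_nat_R m (fun j => g (j + d)%nat) <= sum_nat_R (m + d) g.
Proof. intros Hg. induction m; simpl; [apply sum_nat_R_nonneg; auto | lra]. Qed.

Definition in_window (K : nat) (n : Z) : Prop := (- Z.of_nat K <= n <= Z.of_nat K)%Z.

Lemma sumZ_R_ext K f g : (forall n, in_window K n -> f n = g n) -> sumZ_R K f = sumZ_R K g.
Proof. intros H. apply sum_nat_R_ext. intros j Hj. apply H. unfold in_window. lia. Qed.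

Lemma sumZ_R_le K f g : (forall n, in_window K n -> f n <= g n) -> sumZ_R K f <= sumZ_R K g.
Proof. intros H. apply sum_nat_R_le. intros j Hj. apply H. unfold in_window. lia. Qed.

Lemma sumZ_R_nonneg K f : (forall n, 0 <= f n) -> 0 <= sumZ_R K f.
Proof. intros H. apply sum_nat_R_nonneg. auto. Qed.

Lemma sumZ_R_plus K f g : sumZ_R K (fun n => f n + g n) = sumZ_R K f + sumZ_R K g.
Proof. apply sum_nat_R_plus. Qed.

Lemma sumZ_R_scal K c f : sumZ_R K (fun n => c * f n) = c * sumZ_R K f.
Proof. apply sum_nat_R_scal. Qed.

Lemma sumZ_R_swap K1 K2 F :
  sumZ_R K1 (fun a => sumZ_R K2 (F a)) = sumZ_R K2 (fun b => sumZ_R K1 (fun a => F a b)).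
Proof. apply sum_nat_R_swap. Qed.

Lemma sumZ_R_abs K f : Rabs (sumZ_R K f) <= sumZ_R K (fun n => Rabs (f n)).
Proof. apply sum_nat_R_abs. Qed.

Lemma sumZ_R_const_le K f c :
  (forall n, in_window K n -> f n <= c) -> sumZ_R K f <= INR (2 * K + 1) * c.
Proof. intros H. apply sum_nat_R_const_le. intros j Hj. apply H. unfold in_window; lia. Qed.

Lemma sumZ_R_Cauchy_Schwarz K t A B :
  (forall j, 0 <= A j) -> (forall j, 0 <= B j) -> (forall j, t j ^ 2 <= A j * B j) ->
  sumZ_R K t ^ 2 <= sumZ_R K A * sumZ_R K B.
Proof. intros. apply sum_nat_R_Cauchy_Schwarz; auto. Qed.

Lemma sumZ_R_S K f :
  sumZ_R (S K) f = sumZ_R K f + f (- Z.of_nat (S K))%Z + f (Z.of_nat (S K)).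
Proof.
  unfold sumZ_R. replace (2 * S K + 1)%nat with (S (S (2 * K + 1))) by lia.
  rewrite sum_nat_R_cons, sum_nat_R_S.
  rewrite (sum_nat_R_ext _ (fun j => f (Z.of_nat (S j) - Z.of_nat (S K))%Z)
     (fun j => f (Z.of_nat j - Z.of_nat K)%Z)) by (intros; f_equal; lia).
  replace (Z.of_nat 0 - Z.of_nat (S K))%Z with (- Z.of_nat (S K))%Z by lia.
  replace (Z.of_nat (S (2 * K + 1)) - Z.of_nat (S K))%Z with (Z.of_nat (S K)) by lia.
  ring.
Qed.

Lemma sumZ_R_opp K f : sumZ_R K (fun n => f (- n)%Z) = sumZ_R K f.
Proof.
  induction K.
  - unfold sumZ_R; simpl. now replace (- (0 - 0))%Z with 0%Z by lia.
  - rewrite !sumZ_R_S, IHK, Z.opp_involutive. ring.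
Qed.

Lemma sumZ_R_even K f : (forall n, f (- n)%Z = f n) ->
  sumZ_R K f = f 0%Z + 2 * sum_nat_R K (fun j => f (Z.of_nat (S j))).
Proof.
  intros Hf. induction K.
  - unfold sumZ_R; simpl. ring.
  - rewrite sumZ_R_S, IHK, sum_nat_R_S, Hf. ring.
Qed.

Lemma sumZ_R_le_window K1 K2 f : (forall n, 0 <= f n) -> (K1 <= K2)%nat ->
  sumZ_R K1 f <= sumZ_R K2 f.
Proof.
  intros Hf H. induction H; [lra|]. rewrite sumZ_R_S.
  pose proof (Hf (- Z.of_nat (S m))%Z). pose proof (Hf (Z.of_nat (S m))). lra.
Qed.

Lemma sumZ_R_support K1 K2 f : (forall n, (Z.of_nat K1 < Z.abs n)%Z -> f n = 0) ->
  (K1 <= K2)%nat -> sumZ_R K2 f = sumZ_R K1 f.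
Proof. intros Hf H. induction H; [auto|]. rewrite sumZ_R_S, IHle, !Hf by lia. ring. Qed.

Lemma sumZ_R_shift_le K K2 c f : (forall n, 0 <= f n) ->
  (Z.of_nat K + Z.abs c <= Z.of_nat K2)%Z ->
  sumZ_R K (fun n => f (n + c)%Z) <= sumZ_R K2 f.
Proof.
  intros Hf H. unfold sumZ_R.
  set (d := Z.to_nat (Z.of_nat K2 - Z.of_nat K + c)).
  set (g := fun j => f (Z.of_nat j - Z.of_nat K2)%Z).
  rewrite (sum_nat_R_ext _ _ (fun j => g (j + d)%nat)) by (intros; unfold g; f_equal; lia).
  eapply Rle_trans; [apply sum_nat_R_shift_le; intros; apply Hf|].
  apply sum_nat_R_le_length; [intros; apply Hf | lia].
Qed.

Lemma sumZ_R_term_le K n0 f : (forall n, 0 <= f n) -> in_window K n0 -> f n0 <= sumZ_R K f.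
Proof.
  intros Hf H. eapply Rle_trans; [|apply (sumZ_R_shift_le 0 K n0); auto].
  - unfold sumZ_R; simpl. replace (0 - 0 + n0)%Z with n0 by lia. lra.
  - unfold in_window in H. lia.
Qed.

(** * The weights [<k>^σ] *)

Lemma jbr_pos k : 0 < jbr k.
Proof. unfold jbr. apply sqrt_lt_R0. pose proof (pow2_ge_0 (IZR k)). lra. Qed.

Lemma jbr_ge1 k : 1 <= jbr k.
Proof.
  unfold jbr. rewrite <- sqrt_1 at 1. apply sqrt_le_1_alt. pose proof (pow2_ge_0 (IZR k)). lra.
Qed.

Lemma jbr_sq k : jbr k ^ 2 = 1 + IZR k ^ 2.
Proof. unfold jbr. rewrite pow2_sqrt; auto. pose proof (pow2_ge_0 (IZR k)). lra. Qed.

Lemma jbr_0 : jbr 0 = 1.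
Proof. unfold jbr. simpl. replace (1 + 0 * (0 * 1)) with 1 by ring. apply sqrt_1. Qed.

Lemma jbr_opp k : jbr (- k) = jbr k.
Proof. unfold jbr. rewrite opp_IZR. f_equal. ring. Qed.

Lemma jbr_ge_abs k : Rabs (IZR k) <= jbr k.
Proof.
  rewrite <- sqrt_Rsqr_abs. unfold jbr. apply sqrt_le_1_alt. unfold Rsqr. simpl. nra.
Qed.

Lemma INR_le_jbr N : INR N <= jbr (Z.of_nat N).
Proof.
  pose proof (jbr_ge_abs (Z.of_nat N)). rewrite <- INR_IZR_INZ in H.
  rewrite Rabs_right in H; auto. apply Rle_ge, pos_INR.
Qed.

Lemma jbr_le_of_sq_le a b c : 0 <= c -> 1 + IZR a ^ 2 <= c ^ 2 * (1 + IZR b ^ 2) ->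
  jbr a <= c * jbr b.
Proof.
  intros Hc H. unfold jbr. rewrite <- (sqrt_pow2 c Hc) at 1. rewrite <- sqrt_mult.
  - apply sqrt_le_1_alt; auto.
  - nra.
  - pose proof (pow2_ge_0 (IZR b)). lra.
Qed.

Lemma jbr_le_mono a b : (Z.abs a <= Z.abs b)%Z -> jbr a <= jbr b.
Proof.
  intros H. rewrite <- (Rmult_1_l (jbr b)). apply jbr_le_of_sq_le; [lra|].
  rewrite <- !Rsqr_pow2. assert (Rsqr (IZR a) <= Rsqr (IZR b)).
  { apply Rsqr_le_abs_1. rewrite !Rabs_Zabs. apply IZR_le. lia. }
  unfold Rsqr in *. lra.
Qed.

Lemma jbr_le_twice a b : (Z.abs a <= 2 * Z.abs b)%Z -> jbr a <= 2 * jbr b.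
Proof.
  intros H. apply jbr_le_of_sq_le; [lra|].
  assert (H2 : (a * a <= 4 * (b * b))%Z) by nia.
  apply IZR_le in H2. rewrite !mult_IZR in H2. simpl in *. lra.
Qed.

Lemma jbr_add_le x y : jbr (x + y) <= sqrt 2 * (jbr x * jbr y).
Proof.
  pose proof (jbr_pos x). pose proof (jbr_pos y).
  unfold jbr at 1. rewrite <- (sqrt_pow2 (jbr x * jbr y)) by nra. rewrite <- sqrt_mult by nra.
  apply sqrt_le_1_alt. rewrite plus_IZR, Rpow_mult_distr, !jbr_sq.
  pose proof (pow2_ge_0 (IZR x)). pose proof (pow2_ge_0 (IZR y)).
  pose proof (pow2_ge_0 (IZR x - IZR y)). nra.
Qed.

Lemma Rpower_pos x y : 0 < Rpower x y.
Proof. apply exp_pos. Qed.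

Lemma Rpower_1_l y : Rpower 1 y = 1.
Proof. unfold Rpower. rewrite ln_1, Rmult_0_r. apply exp_0. Qed.

(* [l2sq_partial s w K] is convertible to [sumZ_R K (fun n => wt (2 * s) n * Cnorm2 (w n))]. *)
Definition wt (σ : R) (k : Z) : R := Rpower (jbr k) σ.

Lemma wt_pos σ k : 0 < wt σ k.
Proof. apply Rpower_pos. Qed.

Lemma wt_plus a b k : wt (a + b) k = wt a k * wt b k.
Proof. apply Rpower_plus. Qed.

Lemma wt_0 k : wt 0 k = 1.
Proof. apply Rpower_O, jbr_pos. Qed.

Lemma wt_1 k : wt 1 k = jbr k.
Proof. apply Rpower_1, jbr_pos. Qed.

Lemma wt_2 k : wt 2 k = 1 + IZR k ^ 2.
Proof.
  unfold wt. replace 2 with (INR 2) by (simpl; lra).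
  rewrite Rpower_pow by apply jbr_pos. apply jbr_sq.
Qed.

Lemma wt_opp a k : wt (- a) k = / wt a k.
Proof. apply Rpower_Ropp. Qed.

Lemma wt_Zopp σ k : wt σ (- k) = wt σ k.
Proof. unfold wt. now rewrite jbr_opp. Qed.

Lemma wt_Z0 σ : wt σ 0 = 1.
Proof. unfold wt. rewrite jbr_0. apply Rpower_1_l. Qed.

Lemma wt_le_exponent a b k : a <= b -> wt a k <= wt b k.
Proof. intros. apply Rle_Rpower; auto. apply jbr_ge1. Qed.

Lemma wt_ge1 σ k : 0 <= σ -> 1 <= wt σ k.
Proof. intros. rewrite <- (wt_0 k). now apply wt_le_exponent. Qed.

Lemma Rpower_le_mul u v w t : 0 < u -> 0 < v -> 0 < w -> u <= v * w -> 0 <= t ->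
  Rpower u t <= Rpower v t * Rpower w t.
Proof. intros. rewrite Rpower_mult_distr by auto. apply Rle_Rpower_l; auto. Qed.

Lemma Rpower_opp_le_mul u v w t : 0 < u -> 0 < v -> 0 < w -> w <= v * u -> 0 <= t ->
  Rpower u (- t) <= Rpower v t * Rpower w (- t).
Proof.
  intros Hu Hv Hw H Ht. rewrite !Rpower_Ropp.
  pose proof (Rpower_le_mul w v u t Hw Hv Hu H Ht).
  pose proof (Rpower_pos u t). pose proof (Rpower_pos w t). pose proof (Rpower_pos v t).
  apply (Rmult_le_reg_r (Rpower u t * Rpower w t)); [nra|].
  field_simplify; lra.
Qed.

Lemma Rpower_le_sq c t : 1 <= c -> t <= 2 -> Rpower c t <= c ^ 2.
Proof.
  intros. replace (c ^ 2) with (Rpower c (INR 2)) by (apply Rpower_pow; lra).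
  apply Rle_Rpower; auto.
Qed.

Lemma wt_comparable σ a b c : 1 <= c -> jbr a <= c * jbr b -> jbr b <= c * jbr a ->
  wt σ a <= Rpower c (Rabs σ) * wt σ b.
Proof.
  intros Hc H1 H2. unfold wt. pose proof (jbr_pos a). pose proof (jbr_pos b).
  destruct (Rle_or_lt 0 σ).
  - rewrite Rabs_right by lra. apply Rpower_le_mul; lra.
  - rewrite Rabs_left by lra. replace σ with (- - σ) at 1 3 by ring.
    apply Rpower_opp_le_mul; lra.
Qed.

Lemma wt_comparable_twice σ a b : Rabs σ <= 2 ->
  (Z.abs a <= 2 * Z.abs b)%Z -> (Z.abs b <= 2 * Z.abs a)%Z -> wt σ a <= 4 * wt σ b.
Proof.
  intros Hσ Hab Hba.
  eapply Rle_trans; [apply (wt_comparable σ a b 2); [lra | apply jbr_le_twice ..]; auto|].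
  apply Rmult_le_compat_r; [apply Rlt_le, wt_pos|].
  replace 4 with (2 ^ 2) by ring. apply Rpower_le_sq; lra.
Qed.

Lemma sqrt2_bounds : 1 <= sqrt 2 <= 2.
Proof.
  split; [rewrite <- sqrt_1 at 1; apply sqrt_le_1_alt; lra|].
  pose proof (sqrt_sqrt 2 ltac:(lra)). pose proof (sqrt_pos 2). nra.
Qed.

Lemma wt_add_le σ x y : wt σ (x + y) <= Rpower (sqrt 2) (Rabs σ) * wt σ x * wt (Rabs σ) y.
Proof.
  unfold wt. pose proof sqrt2_bounds. pose proof (jbr_pos x). pose proof (jbr_pos y).
  pose proof (jbr_pos (x + y)). destruct (Rle_or_lt 0 σ).
  - rewrite Rabs_right by lra.
    eapply Rle_trans; [apply (Rpower_le_mul _ (sqrt 2) (jbr x * jbr y)); try nra; apply jbr_add_le|].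
    rewrite <- Rpower_mult_distr by lra. lra.
  - rewrite Rabs_left by lra. set (t := - σ). replace σ with (- t) by (unfold t; ring).
    eapply Rle_trans; [apply (Rpower_opp_le_mul _ (sqrt 2 * jbr y) (jbr x)); try (unfold t; nra)|].
    + pose proof (jbr_add_le (x + y) (- y)) as Hx.
      replace (x + y + - y)%Z with x in Hx by ring. rewrite jbr_opp in Hx. nra.
    + rewrite <- Rpower_mult_distr by lra. lra.
Qed.

Lemma wt_add_le_jbr σ x y : Rabs σ <= 1 -> wt σ (x + y) <= 2 * wt σ x * jbr y.
Proof.
  intros Hσ. eapply Rle_trans; [apply wt_add_le|]. pose proof sqrt2_bounds.
  assert (Rpower (sqrt 2) (Rabs σ) <= 2).
  { eapply Rle_trans; [apply Rle_Rpower; [lra | exact Hσ]|]. rewrite Rpower_1; lra. }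
  assert (wt (Rabs σ) y <= jbr y) by (rewrite <- wt_1; apply wt_le_exponent; lra).
  pose proof (wt_pos σ x). pose proof (wt_pos (Rabs σ) y). pose proof (Rpower_pos (sqrt 2) (Rabs σ)).
  apply Rmult_le_compat; nra.
Qed.

(** * Sums of powers *)

Lemma ln_le_sub_1 y : 0 < y -> ln y <= y - 1.
Proof.
  intros Hy. destruct (Rle_or_lt (ln y) (y - 1)) as [|H]; auto.
  apply exp_increasing in H. rewrite exp_ln in H by auto. pose proof (exp_ineq1_le (y - 1)). lra.
Qed.

Lemma exp_le_compat x y : x <= y -> exp x <= exp y.
Proof. intros [H|H]; [apply Rlt_le, exp_increasing, H | subst; lra]. Qed.

Lemma Rpower_m1 x : 0 < x -> Rpower x (-1) = / x.
Proof. intros. replace (-1) with (- (1)) by ring. rewrite Rpower_Ropp, Rpower_1; auto. Qed.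

Lemma Rpower_split_succ x a : 0 < x ->
  Rpower x a = Rpower (x + 1) a * Rpower (1 - / (x + 1)) a.
Proof.
  intros Hx. replace (1 - / (x + 1)) with (x / (x + 1)) by (field; lra).
  rewrite Rpower_mult_distr; [f_equal; field; lra | lra | apply Rdiv_lt_0_compat; lra].
Qed.

Lemma ln_1_sub_inv_le x : 0 < x -> ln (1 - / (x + 1)) <= - / (x + 1).
Proof.
  intros Hx. replace (1 - / (x + 1)) with (x / (x + 1)) by (field; lra).
  assert (Hpos : 0 < x / (x + 1)) by (apply Rdiv_lt_0_compat; lra).
  pose proof (ln_le_sub_1 _ Hpos) as H.
  replace (x / (x + 1) - 1) with (- / (x + 1)) in H by (field; lra). exact H.
Qed.

(* The next two lemmas compare the terms of [Σ k^(-a-1)] and [Σ k^(b-1)] with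
   telescoping differences, as in the integral test. *)
Lemma Rpower_succ_le_diff_neg a x : 0 < a -> 0 < x ->
  Rpower (x + 1) (- (a + 1)) <= (Rpower x (- a) - Rpower (x + 1) (- a)) / a.
Proof.
  intros Ha Hx. set (u := / (x + 1)).
  assert (Hu : 0 < u) by (apply Rinv_0_lt_compat; lra).
  rewrite (Rpower_split_succ x (- a)) by auto. fold u.
  assert (HQ : 1 + a * u <= Rpower (1 - u) (- a)).
  { unfold Rpower. eapply Rle_trans; [|apply exp_ineq1_le].
    pose proof (ln_1_sub_inv_le x Hx). fold u in H. nra. }
  replace (- (a + 1)) with (- a + - 1) by ring. rewrite Rpower_plus, Rpower_m1 by lra.
  fold u. pose proof (Rpower_pos (x + 1) (- a)).
  set (R0 := Rpower (x + 1) (- a)) in *. set (Q := Rpower (1 - u) (- a)) in *.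
  replace ((R0 * Q - R0) / a) with (R0 * ((Q - 1) / a)) by (field; lra).
  apply Rmult_le_compat_l; [lra|].
  apply (Rmult_le_reg_l a); [lra|]. field_simplify; lra.
Qed.

Lemma Rpower_succ_le_diff_pos b x : 0 < b < 1 -> 0 < x ->
  Rpower (x + 1) (b - 1) <= 2 / b * (Rpower (x + 1) b - Rpower x b).
Proof.
  intros Hb Hx. set (u := / (x + 1)).
  assert (Hu : 0 < u) by (apply Rinv_0_lt_compat; lra).
  assert (Hu1 : u < 1) by (unfold u; rewrite <- Rinv_1; apply Rinv_lt_contravar; lra).
  rewrite (Rpower_split_succ x b) by auto. fold u.
  (* exp(-bu) <= 1 - bu/2 because bu < 1 *)
  assert (HQ : Rpower (1 - u) b <= 1 - b * u / 2).
  { unfold Rpower. pose proof (ln_1_sub_inv_le x Hx) as Hln. fold u in Hln.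
    assert (Hexp : exp (b * ln (1 - u)) <= exp (- (b * u))) by (apply exp_le_compat; nra).
    eapply Rle_trans; [exact Hexp|]. rewrite exp_Ropp.
    pose proof (exp_ineq1_le (b * u)). assert (0 < b * u < 1) by nra.
    apply (Rmult_le_reg_l (exp (b * u))); [apply exp_pos|].
    rewrite Rinv_r by (apply Rgt_not_eq, exp_pos). nra. }
  replace (b - 1) with (b + - 1) by ring. rewrite Rpower_plus, Rpower_m1 by lra.
  fold u. pose proof (Rpower_pos (x + 1) b).
  apply (Rmult_le_reg_l (b / 2)); [lra|].
  replace (b / 2 * (2 / b * (Rpower (x + 1) b - Rpower (x + 1) b * Rpower (1 - u) b)))
    with (Rpower (x + 1) b - Rpower (x + 1) b * Rpower (1 - u) b) by (field; lra).
  nra.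
Qed.

Lemma sum_Rpower_neg_le a N : 0 < a ->
  sum_nat_R N (fun j => Rpower (INR (S j)) (- (a + 1))) <= 1 + / a.
Proof.
  intros Ha.
  assert (H : forall M, (1 <= M)%nat ->
     sum_nat_R M (fun j => Rpower (INR (S j)) (- (a + 1))) <= 1 + / a - Rpower (INR M) (- a) / a).
  { intros M HM. induction HM.
    - simpl. rewrite !Rpower_1_l. unfold Rdiv. lra.
    - rewrite sum_nat_R_S, !S_INR.
      pose proof (Rpower_succ_le_diff_neg a (INR m) Ha ltac:(apply lt_0_INR; lia)). lra. }
  destruct N; [simpl; pose proof (Rinv_0_lt_compat a Ha); lra|].
  pose proof (H (S N) ltac:(lia)). pose proof (Rpower_pos (INR (S N)) (- a)).
  assert (0 < Rpower (INR (S N)) (- a) / a) by (apply Rdiv_lt_0_compat; auto). lra.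
Qed.

Lemma sum_Rpower_pos_le b N : 0 < b < 1 -> (1 <= N)%nat ->
  sum_nat_R N (fun j => Rpower (INR (S j)) (b - 1)) <= 2 / b * Rpower (INR N) b.
Proof.
  intros Hb HN. induction HN.
  - simpl. rewrite !Rpower_1_l. apply (Rmult_le_reg_l b); [lra|]. field_simplify; lra.
  - rewrite sum_nat_R_S. pose proof (Rpower_succ_le_diff_pos b (INR m) Hb ltac:(apply lt_0_INR; lia)).
    rewrite <- S_INR in H. lra.
Qed.

Lemma wt_le_Rpower_INR σ j : σ <= 0 -> wt σ (Z.of_nat (S j)) <= Rpower (INR (S j)) σ.
Proof.
  intros. unfold wt. set (t := - σ). replace σ with (- t) by (unfold t; ring).
  rewrite !Rpower_Ropp. apply Rinv_le_contravar; [apply Rpower_pos|].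
  apply Rle_Rpower_l; [unfold t; lra|].
  split; [apply lt_0_INR; lia | apply INR_le_jbr].
Qed.

Lemma sum_wt_bounded g : 1 < g -> exists C, 0 < C /\ forall K, sumZ_R K (wt (- g)) <= C.
Proof.
  intros Hg. exists (1 + 2 * (1 + / (g - 1))).
  split; [pose proof (Rinv_0_lt_compat (g - 1)); lra|].
  intros K. rewrite sumZ_R_even by apply wt_Zopp. rewrite wt_Z0.
  assert (sum_nat_R K (fun j => wt (- g) (Z.of_nat (S j))) <= 1 + / (g - 1)).
  { eapply Rle_trans; [apply sum_nat_R_le; intros j _; apply wt_le_Rpower_INR; lra|].
    replace (- g) with (- ((g - 1) + 1)) by ring. apply sum_Rpower_neg_le. lra. }
  lra.
Qed.

Lemma sum_wt_window_le_neg σ : -1 < σ < 0 -> exists C, 0 < C /\ forall N,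
  sumZ_R N (wt σ) <= C * wt (1 + σ) (Z.of_nat N).
Proof.
  intros Hσ. set (b := 1 + σ). assert (Hb : 0 < b < 1) by (unfold b; lra).
  exists (1 + 4 / b). assert (0 < 4 / b) by (apply Rdiv_lt_0_compat; lra). split; [lra|].
  intros N. rewrite sumZ_R_even by apply wt_Zopp. rewrite wt_Z0.
  assert (H1 : 1 <= wt b (Z.of_nat N)) by (apply wt_ge1; lra).
  destruct N as [|N]; [cbn [sum_nat_R]; nra|].
  assert (sum_nat_R (S N) (fun j => wt σ (Z.of_nat (S j))) <= 2 / b * Rpower (INR (S N)) b).
  { eapply Rle_trans; [apply sum_nat_R_le; intros j _; apply wt_le_Rpower_INR; lra|].
    replace σ with (b - 1) by (unfold b; ring). apply sum_Rpower_pos_le; auto. lia. }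
  assert (Rpower (INR (S N)) b <= wt b (Z.of_nat (S N))).
  { apply Rle_Rpower_l; [lra|]. split; [apply lt_0_INR; lia | apply INR_le_jbr]. }
  unfold Rdiv in *. nra.
Qed.

Lemma sum_wt_window_le_nonneg σ : 0 <= σ -> forall N,
  sumZ_R N (wt σ) <= 3 * wt (1 + σ) (Z.of_nat N).
Proof.
  intros Hσ N. eapply Rle_trans; [apply (sumZ_R_const_le N _ (wt σ (Z.of_nat N)))|].
  - intros n Hn. apply Rle_Rpower_l; auto. split; [apply jbr_pos|].
    apply jbr_le_mono. unfold in_window in Hn. lia.
  - rewrite wt_plus, wt_1. pose proof (INR_le_jbr N). pose proof (jbr_ge1 (Z.of_nat N)).
    pose proof (wt_pos σ (Z.of_nat N)). rewrite plus_INR, mult_INR. simpl. nra.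
Qed.

Lemma sum_wt_window_le σ : -1 < σ -> exists C, 0 < C /\ forall N,
  sumZ_R N (wt σ) <= C * wt (1 + σ) (Z.of_nat N).
Proof.
  intros Hσ. destruct (Rlt_or_le σ 0).
  - apply sum_wt_window_le_neg; lra.
  - exists 3. split; [lra | apply sum_wt_window_le_nonneg; auto].
Qed.

(** * The kernel bound *)

Definition ind_le (a b : Z) : R := Defs.ind (Z.leb a b).

Lemma ind_le_bounds a b : 0 <= ind_le a b <= 1.
Proof. unfold ind_le, Defs.ind. destruct (Z.leb a b); lra. Qed.

Lemma ind_le_sq a b : ind_le a b ^ 2 = ind_le a b.
Proof. unfold ind_le, Defs.ind. destruct (Z.leb a b); ring. Qed.

Lemma ind_le_total a b : 1 <= ind_le a b + ind_le b a.
Proof. unfold ind_le, Defs.ind. destruct (Z.leb_spec a b), (Z.leb_spec b a); lra || lia. Qed.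

Lemma sumZ_R_cutoff K1 K2 f : (K1 <= K2)%nat ->
  sumZ_R K2 (fun c => f c * ind_le (Z.abs c) (Z.of_nat K1)) = sumZ_R K1 f.
Proof.
  intros H. rewrite (sumZ_R_support K1 K2); auto.
  - apply sumZ_R_ext. intros n Hn. unfold ind_le, Defs.ind, in_window in *.
    destruct (Z.leb_spec (Z.abs n) (Z.of_nat K1)); [ring | lia].
  - intros n Hn. unfold ind_le, Defs.ind. destruct (Z.leb_spec (Z.abs n) (Z.of_nat K1)); [lia | ring].
Qed.

Lemma sumZ_R_cutoff_le K N f : (forall n, 0 <= f n) ->
  sumZ_R K (fun n => f n * ind_le (Z.abs n) (Z.of_nat N)) <= sumZ_R N f.
Proof.
  intros Hf. rewrite <- (sumZ_R_cutoff N (Nat.max K N)) by lia.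
  apply sumZ_R_le_window; [|lia]. intros n.
  pose proof (ind_le_bounds (Z.abs n) (Z.of_nat N)). pose proof (Hf n). nra.
Qed.
(* The sum runs over [|p + d| <= 2|q|], and [<2q>^(1+σ) <= 4 <q>^(1+σ)]. *)
Lemma sum_wt_shift_cutoff_le σ : -1 < σ <= 1 -> exists C, 0 < C /\ forall K q d,
  (Z.abs d <= Z.abs q)%Z ->
  sumZ_R K (fun p => wt σ (p + d) * ind_le (Z.abs p) (Z.abs q)) <= C * wt (1 + σ) q.
Proof.
  intros Hσ. destruct (sum_wt_window_le σ ltac:(lra)) as [C [HC HsumC]].
  exists (4 * C). split; [lra|]. intros K q d Hd.
  set (N := Z.abs_nat q). replace (Z.abs q) with (Z.of_nat N) by (unfold N; lia).
  eapply Rle_trans.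
  { apply (sumZ_R_cutoff_le K N (fun p => wt σ (p + d))). intros; apply Rlt_le, wt_pos. }
  eapply Rle_trans; [apply (sumZ_R_shift_le N (2 * N) d); [intros; apply Rlt_le, wt_pos | lia]|].
  eapply Rle_trans; [apply HsumC|].
  replace (4 * C * wt (1 + σ) q) with (C * (4 * wt (1 + σ) q)) by ring.
  apply Rmult_le_compat_l; [lra|].
  apply wt_comparable_twice; [apply Rabs_le; lra | lia | lia].
Qed.

Section Kernel.

Variable s : R.
Hypothesis Hs : 0 < s < 1 / 2.

Let r := wt (2 * s).

(* Split according to whether [p] or [p + q] is comparable to [q]. *)
Lemma kernel_term_le p q : (Z.abs p <= Z.abs q)%Z ->
  wt (4 * s - 1) (p + q) / (r p * r q) <=
  4 * wt (4 * s - 1) q * wt (- (2 * s)) q * wt (- (2 * s)) p +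
  4 * wt (- (4 * s)) q * wt (4 * s - 1) (p + q).
Proof.
  intros Hpq. unfold r. rewrite !wt_opp.
  assert (Hq4 : wt (4 * s) q = wt (2 * s) q * wt (2 * s) q) by (rewrite <- wt_plus; f_equal; ring).
  rewrite Hq4.
  pose proof (wt_pos (2 * s) p). pose proof (wt_pos (2 * s) q).
  pose proof (wt_pos (4 * s - 1) q). pose proof (wt_pos (4 * s - 1) (p + q)).
  assert (Hσ1 : Rabs (4 * s - 1) <= 2) by (apply Rabs_le; lra).
  assert (Hσ2 : Rabs (- (2 * s)) <= 2) by (apply Rabs_le; lra).
  destruct (Z.le_gt_cases (2 * Z.abs p) (Z.abs q)).
  - assert (wt (4 * s - 1) (p + q) <= 4 * wt (4 * s - 1) q)
      by (apply wt_comparable_twice; auto; lia).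
    assert (0 < / wt (2 * s) p) by (apply Rinv_0_lt_compat; lra).
    assert (0 < / wt (2 * s) q) by (apply Rinv_0_lt_compat; lra).
    assert (0 <= 4 * / (wt (2 * s) q * wt (2 * s) q) * wt (4 * s - 1) (p + q))
      by (apply Rmult_le_pos; [apply Rmult_le_pos|]; [lra | apply Rlt_le, Rinv_0_lt_compat; nra | lra]).
    assert (wt (4 * s - 1) (p + q) * (/ wt (2 * s) p * / wt (2 * s) q) <=
            4 * wt (4 * s - 1) q * (/ wt (2 * s) p * / wt (2 * s) q))
      by (apply Rmult_le_compat_r; nra).
    unfold Rdiv. rewrite Rinv_mult. lra.
  - assert (Hcmp : wt (- (2 * s)) p <= 4 * wt (- (2 * s)) q)
      by (apply wt_comparable_twice; auto; lia).
    rewrite !wt_opp in Hcmp.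
    assert (0 < / wt (2 * s) p) by (apply Rinv_0_lt_compat; lra).
    assert (0 < / wt (2 * s) q) by (apply Rinv_0_lt_compat; lra).
    assert (0 <= 4 * wt (4 * s - 1) q * / wt (2 * s) q * / wt (2 * s) p)
      by (repeat apply Rmult_le_pos; lra).
    assert (wt (4 * s - 1) (p + q) * / wt (2 * s) q * / wt (2 * s) p <=
            wt (4 * s - 1) (p + q) * / wt (2 * s) q * (4 * / wt (2 * s) q))
      by (apply Rmult_le_compat_l; [apply Rmult_le_pos|]; lra).
    unfold Rdiv. rewrite !Rinv_mult. lra.
Qed.

Lemma sum_low_frequency_bounded : exists M, 0 < M /\ forall K q,
  sumZ_R K (fun p => wt (4 * s - 1) (p + q) * ind_le (Z.abs p) (Z.abs q) / (r p * r q)) <= M.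
Proof.
  destruct (sum_wt_shift_cutoff_le (- (2 * s)) ltac:(lra)) as [C1 [HC1 H1]].
  destruct (sum_wt_shift_cutoff_le (4 * s - 1) ltac:(lra)) as [C2 [HC2 H2]].
  exists (4 * C1 + 4 * C2). split; [lra|]. intros K q.
  set (A := 4 * wt (4 * s - 1) q * wt (- (2 * s)) q).
  set (B := 4 * wt (- (4 * s)) q).
  apply Rle_trans with (sumZ_R K (fun p =>
    A * (wt (- (2 * s)) (p + 0) * ind_le (Z.abs p) (Z.abs q)) +
    B * (wt (4 * s - 1) (p + q) * ind_le (Z.abs p) (Z.abs q)))).
  { apply sumZ_R_le. intros p _. rewrite Z.add_0_r. unfold ind_le, Defs.ind, A, B.
    destruct (Z.leb_spec (Z.abs p) (Z.abs q)).
    - pose proof (kernel_term_le p q H). unfold Rdiv in *. lra.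
    - unfold Rdiv. lra. }
  rewrite sumZ_R_plus, !sumZ_R_scal.
  assert (E1 : A * wt (1 + - (2 * s)) q = 4).
  { unfold A. rewrite !Rmult_assoc, <- !wt_plus.
    replace (4 * s - 1 + (- (2 * s) + (1 + - (2 * s)))) with 0 by ring. rewrite wt_0. ring. }
  assert (E2 : B * wt (1 + (4 * s - 1)) q = 4).
  { unfold B. rewrite Rmult_assoc, <- wt_plus.
    replace (- (4 * s) + (1 + (4 * s - 1))) with 0 by ring. rewrite wt_0. ring. }
  assert (0 < A)
    by (unfold A; pose proof (wt_pos (4 * s - 1) q); pose proof (wt_pos (- (2 * s)) q); nra).
  assert (0 < B) by (unfold B; pose proof (wt_pos (- (4 * s)) q); lra).
  apply Rplus_le_compat.
  - eapply Rle_trans; [apply Rmult_le_compat_l; [lra | apply H1; lia]|].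
    rewrite Rmult_comm, Rmult_assoc, (Rmult_comm _ A), E1. lra.
  - eapply Rle_trans; [apply Rmult_le_compat_l; [lra | apply H2; lia]|].
    rewrite Rmult_comm, Rmult_assoc, (Rmult_comm _ B), E2. lra.
Qed.

Definition kernel_bounded (M0 : R) : Prop := forall K1 K2 q,
  sumZ_R K1 (fun a => sumZ_R K2 (fun p =>
     wt (4 * s - 1) (a + p + q) * ind_le (Z.abs p) (Z.abs q) /
       ((1 + IZR a ^ 2) * r a * r p * r q))) <= M0.

Lemma kernel_bound : exists M0, 0 < M0 /\ kernel_bounded M0.
Proof.
  destruct (sum_wt_bounded (1 + 2 * s) ltac:(lra)) as [C1 [HC1 H1]].
  destruct sum_low_frequency_bounded as [M [HM HJ]].
  exists (2 * C1 * M). split; [nra|]. intros K1 K2 q.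
  set (j := fun p => wt (4 * s - 1) (p + q) * ind_le (Z.abs p) (Z.abs q) / (r p * r q)).
  apply Rle_trans with (sumZ_R K1 (fun a => 2 * wt (- (1 + 2 * s)) a * sumZ_R K2 j)).
  { apply sumZ_R_le. intros a _. rewrite <- sumZ_R_scal. apply sumZ_R_le. intros p _. unfold j, r.
    pose proof (wt_pos (2 * s) a). pose proof (wt_pos (2 * s) p). pose proof (wt_pos (2 * s) q).
    pose proof (jbr_pos a). pose proof (ind_le_bounds (Z.abs p) (Z.abs q)).
    assert (Hp : wt (4 * s - 1) (a + p + q) <= 2 * wt (4 * s - 1) (p + q) * jbr a).
    { replace (a + p + q)%Z with ((p + q) + a)%Z by ring.
      apply wt_add_le_jbr. apply Rabs_le; lra. }
    rewrite <- jbr_sq, wt_opp, wt_plus, wt_1.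
    set (W := wt (4 * s - 1) (p + q)) in *. set (I := ind_le (Z.abs p) (Z.abs q)) in *.
    set (J := jbr a) in *.
    replace (2 * / (J * wt (2 * s) a) * (W * I / (wt (2 * s) p * wt (2 * s) q))) with
      ((2 * W * J) * I / (J ^ 2 * wt (2 * s) a * wt (2 * s) p * wt (2 * s) q)) by (field; lra).
    unfold Rdiv. apply Rmult_le_compat_r;
      [apply Rlt_le, Rinv_0_lt_compat; repeat apply Rmult_lt_0_compat; nra|].
    apply Rmult_le_compat_r; lra. }
  rewrite (sumZ_R_ext _ _ (fun a => (2 * sumZ_R K2 j) * wt (- (1 + 2 * s)) a)) by (intros; ring).
  rewrite sumZ_R_scal.
  assert (0 <= sumZ_R K2 j).
  { apply sumZ_R_nonneg. intros p. unfold j, r.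
    pose proof (wt_pos (2 * s) p). pose proof (wt_pos (2 * s) q).
    pose proof (wt_pos (4 * s - 1) (p + q)).
    pose proof (ind_le_bounds (Z.abs p) (Z.abs q)).
    apply Rmult_le_pos; [nra | apply Rlt_le, Rinv_0_lt_compat; nra]. }
  pose proof (HJ K2 q). fold j in H0. pose proof (H1 K1).
  assert (0 <= sumZ_R K1 (wt (- (1 + 2 * s)))) by (apply sumZ_R_nonneg; intros; apply Rlt_le, wt_pos).
  apply Rle_trans with (2 * M * C1); [apply Rmult_le_compat; lra | lra].
Qed.

End Kernel.

(** * The trilinear estimate *)

Lemma sumZ_R_reflect_shift_le K K2 d f : (forall n, 0 <= f n) ->
  (Z.of_nat K + Z.abs d <= Z.of_nat K2)%Z ->
  sumZ_R K (fun n => f (d - n)%Z) <= sumZ_R K2 f.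
Proof.
  intros Hf H. rewrite <- (sumZ_R_opp K (fun n => f (d - n)%Z)).
  rewrite (sumZ_R_ext _ _ (fun n => f (n + d)%Z)) by (intros; f_equal; ring).
  now apply sumZ_R_shift_le.
Qed.

Lemma sumZ_R_swap3 K K' F :
  sumZ_R K (fun n => sumZ_R K' (fun a => sumZ_R K' (fun c => F n a c))) =
  sumZ_R K' (fun a => sumZ_R K' (fun c => sumZ_R K (fun n => F n a c))).
Proof. rewrite sumZ_R_swap. apply sumZ_R_ext. intros a _. apply sumZ_R_swap. Qed.

Lemma sumZ_R_prod K1 K2 f g :
  sumZ_R K1 (fun a => sumZ_R K2 (fun c => f a * g c)) = sumZ_R K1 f * sumZ_R K2 g.
Proof.
  transitivity (sumZ_R K1 (fun a => sumZ_R K2 g * f a)).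
  - apply sumZ_R_ext. intros a _. rewrite Rmult_comm, <- sumZ_R_scal. reflexivity.
  - rewrite sumZ_R_scal. ring.
Qed.

Lemma sumZ_R2_Cauchy_Schwarz K1 K2 t A B :
  (forall a c, 0 <= A a c) -> (forall a c, 0 <= B a c) ->
  (forall a c, t a c ^ 2 <= A a c * B a c) ->
  sumZ_R K1 (fun a => sumZ_R K2 (t a)) ^ 2 <=
  sumZ_R K1 (fun a => sumZ_R K2 (A a)) * sumZ_R K1 (fun a => sumZ_R K2 (B a)).
Proof.
  intros HA HB Ht. apply sumZ_R_Cauchy_Schwarz; intros; try apply sumZ_R_nonneg; auto.
  now apply sumZ_R_Cauchy_Schwarz.
Qed.

Definition l2_bounded (s : R) (x : Z -> R) (E : R) : Prop :=
  (forall k, 0 <= x k) /\ (forall K, sumZ_R K (fun k => wt (2 * s) k * x k ^ 2) <= E).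

Lemma l2_bounded_nonneg s x E : l2_bounded s x E -> 0 <= E.
Proof.
  intros [Hx HE]. eapply Rle_trans; [|apply (HE 0%nat)]. apply sumZ_R_nonneg. intros n.
  pose proof (wt_pos (2 * s) n). pose proof (pow2_ge_0 (x n)). nra.
Qed.

Definition Qsum (chi : Z -> Z -> R) (x y z : Z -> R) (K : nat) (n : Z) : R :=
  sumZ_R K (fun a => sumZ_R K (fun c =>
    x a * y c * z (n - a - c)%Z * chi c (n - a - c)%Z / jbr a)).

Definition Qfull := Qsum (fun _ _ => 1).
Definition Qlow := Qsum (fun c m => ind_le (Z.abs c) (Z.abs m)).
Definition Qhigh := Qsum (fun c m => ind_le (Z.abs m) (Z.abs c)).

Lemma Qsum_nonneg chi x y z K n : (forall c m, 0 <= chi c m) ->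
  (forall k, 0 <= x k) -> (forall k, 0 <= y k) -> (forall k, 0 <= z k) ->
  0 <= Qsum chi x y z K n.
Proof.
  intros Hchi Hx Hy Hz. apply sumZ_R_nonneg; intros a; apply sumZ_R_nonneg; intros c.
  pose proof (Hx a). pose proof (Hy c). pose proof (Hz (n - a - c)%Z).
  pose proof (Hchi c (n - a - c)%Z). pose proof (jbr_pos a).
  apply Rmult_le_pos; [repeat apply Rmult_le_pos; lra | apply Rlt_le, Rinv_0_lt_compat; lra].
Qed.

Lemma Qfull_le_split x y z K n :
  (forall k, 0 <= x k) -> (forall k, 0 <= y k) -> (forall k, 0 <= z k) ->
  Qfull x y z K n <= Qlow x y z K n + Qhigh x y z K n.
Proof.
  intros Hx Hy Hz. unfold Qfull, Qlow, Qhigh, Qsum. rewrite <- sumZ_R_plus. apply sumZ_R_le. intros a _.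
  rewrite <- sumZ_R_plus. apply sumZ_R_le. intros c _.
  pose proof (ind_le_total (Z.abs c) (Z.abs (n - a - c))).
  pose proof (Hx a). pose proof (Hy c). pose proof (Hz (n - a - c)%Z). pose proof (jbr_pos a).
  assert (0 <= x a * y c * z (n - a - c)%Z / jbr a)
    by (apply Rmult_le_pos; [repeat apply Rmult_le_pos; lra | apply Rlt_le, Rinv_0_lt_compat; lra]).
  unfold Rdiv in *. nra.
Qed.

(* The substitution c <-> m exchanges y and z; it moves the window, which is enlarged. *)
Lemma Qhigh_le_Qlow x y z K K' n :
  (forall k, 0 <= x k) -> (forall k, 0 <= y k) -> (forall k, 0 <= z k) -> in_window K n ->
  Qhigh x y z K' n <= Qlow x z y (K + 2 * K') n.
Proof.
  intros Hx Hy Hz Hn. unfold Qlow, Qhigh, Qsum.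
  set (F := fun a c => x a * z c * y (n - a - c)%Z * ind_le (Z.abs c) (Z.abs (n - a - c)) / jbr a).
  assert (HF : forall a c, 0 <= F a c).
  { intros a c. unfold F. pose proof (Hx a). pose proof (Hz c). pose proof (Hy (n - a - c)%Z).
    pose proof (ind_le_bounds (Z.abs c) (Z.abs (n - a - c))). pose proof (jbr_pos a).
    apply Rmult_le_pos; [repeat apply Rmult_le_pos; lra | apply Rlt_le, Rinv_0_lt_compat; lra]. }
  apply Rle_trans with (sumZ_R K' (fun a => sumZ_R (K + 2 * K') (F a))).
  - apply sumZ_R_le. intros a Ha.
    rewrite (sumZ_R_ext _ _ (fun c => F a ((n - a) - c)%Z)).
    + apply sumZ_R_reflect_shift_le; auto. unfold in_window in *. lia.
    + intros c _. unfold F. replace (n - a - (n - a - c))%Z with c by ring.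
      unfold Rdiv. ring.
  - apply (sumZ_R_le_window K' (K + 2 * K') (fun a => sumZ_R (K + 2 * K') (F a)));
      [intros; apply sumZ_R_nonneg; auto | lia].
Qed.

Section Trilinear.

Variable s : R.
Variable M0 : R.
Hypothesis HM0 : 0 <= M0.
Hypothesis HK : kernel_bounded s M0.

Let r := wt (2 * s).

Lemma r_pos k : 0 < r k.
Proof. apply wt_pos. Qed.

Let B (z : Z -> R) (n a c : Z) : R :=
  ind_le (Z.abs c) (Z.abs (n - a - c)) * z (n - a - c)%Z ^ 2 / ((1 + IZR a ^ 2) * r a * r c).

Lemma B_nonneg z n a c : 0 <= B z n a c.
Proof.
  unfold B. pose proof (ind_le_bounds (Z.abs c) (Z.abs (n - a - c))).
  pose proof (pow2_ge_0 (z (n - a - c)%Z)). pose proof (pow2_ge_0 (IZR a)).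
  pose proof (r_pos a). pose proof (r_pos c).
  apply Rmult_le_pos; [nra | apply Rlt_le, Rinv_0_lt_compat; repeat apply Rmult_lt_0_compat; lra].
Qed.

(* Cauchy-Schwarz, putting the weights [<a>^(2s) <c>^(2s)] on [x a * y c]. *)
Lemma Qlow_sq_le x y z E K n : l2_bounded s x E -> l2_bounded s y E ->
  Qlow x y z K n ^ 2 <= E ^ 2 * sumZ_R K (fun a => sumZ_R K (B z n a)).
Proof.
  intros [Hx Ex] [Hy Ey]. unfold Qlow, Qsum.
  eapply Rle_trans;
    [apply (sumZ_R2_Cauchy_Schwarz K K _ (fun a c => r a * x a ^ 2 * (r c * y c ^ 2)) (B z n))|].
  - intros a c. pose proof (r_pos a). pose proof (r_pos c).
    pose proof (pow2_ge_0 (x a)). pose proof (pow2_ge_0 (y c)).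
    apply Rmult_le_pos; apply Rmult_le_pos; lra.
  - intros; apply B_nonneg.
  - intros a c. unfold B. right.
    rewrite <- jbr_sq. pose proof (jbr_pos a). pose proof (r_pos a). pose proof (r_pos c).
    set (ch := ind_le (Z.abs c) (Z.abs (n - a - c))).
    replace ((x a * y c * z (n - a - c)%Z * ch / jbr a) ^ 2) with
      ((x a * y c * z (n - a - c)%Z / jbr a) ^ 2 * ch ^ 2) by (field; lra).
    unfold ch. rewrite ind_le_sq. field. repeat split; lra.
  - apply Rmult_le_compat_r; [apply sumZ_R_nonneg; intros; apply sumZ_R_nonneg; intros; apply B_nonneg|].
    rewrite (sumZ_R_prod K K (fun a => r a * x a ^ 2) (fun c => r c * y c ^ 2)).
    assert (0 <= sumZ_R K (fun a => r a * x a ^ 2)).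
    { apply sumZ_R_nonneg. intros k. pose proof (r_pos k). pose proof (pow2_ge_0 (x k)). nra. }
    assert (0 <= sumZ_R K (fun c => r c * y c ^ 2)).
    { apply sumZ_R_nonneg. intros k. pose proof (r_pos k). pose proof (pow2_ge_0 (y k)). nra. }
    replace (E ^ 2) with (E * E) by ring. apply Rmult_le_compat; auto.
Qed.

(* After the shift [m = n - a - c], the sum over [n] becomes the kernel of [kernel_bounded]. *)
Lemma weighted_B_sum_le z E K K' : l2_bounded s z E ->
  sumZ_R K (fun n => wt (4 * s - 1) n * sumZ_R K' (fun a => sumZ_R K' (B z n a))) <= M0 * E.
Proof.
  intros [Hz Ez].
  set (h := fun a c m => wt (4 * s - 1) (a + c + m) * ind_le (Z.abs c) (Z.abs m) * z m ^ 2 /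
                          ((1 + IZR a ^ 2) * r a * r c)).
  assert (Hh : forall a c m, 0 <= h a c m).
  { intros. unfold h. pose proof (ind_le_bounds (Z.abs c) (Z.abs m)). pose proof (pow2_ge_0 (z m)).
    pose proof (pow2_ge_0 (IZR a)). pose proof (r_pos a). pose proof (r_pos c).
    pose proof (wt_pos (4 * s - 1) (a + c + m)).
    apply Rmult_le_pos; [apply Rmult_le_pos; [nra | lra] |
      apply Rlt_le, Rinv_0_lt_compat; repeat apply Rmult_lt_0_compat; lra]. }
  rewrite (sumZ_R_ext K _ (fun n => sumZ_R K' (fun a => sumZ_R K' (fun c => h a c (n - a - c)%Z)))).
  2:{ intros n _. rewrite <- sumZ_R_scal. apply sumZ_R_ext. intros a _. rewrite <- sumZ_R_scal.
      apply sumZ_R_ext. intros c _. unfold h, B. replace (a + c + (n - a - c))%Z with n by ring.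
      unfold Rdiv. ring. }
  rewrite sumZ_R_swap3.
  apply Rle_trans with (sumZ_R K' (fun a => sumZ_R K' (fun c => sumZ_R (K + 2 * K') (h a c)))).
  { apply sumZ_R_le. intros a Ha. apply sumZ_R_le. intros c Hc.
    rewrite (sumZ_R_ext K _ (fun n => h a c (n + - (a + c))%Z)) by (intros; f_equal; ring).
    apply sumZ_R_shift_le; auto. unfold in_window in *. lia. }
  rewrite <- sumZ_R_swap3.
  apply Rle_trans with (sumZ_R (K + 2 * K') (fun m => M0 * (r m * z m ^ 2))).
  { apply sumZ_R_le. intros m _.
    rewrite (sumZ_R_ext K' _ (fun a => r m * z m ^ 2 * sumZ_R K' (fun c =>
        wt (4 * s - 1) (a + c + m) * ind_le (Z.abs c) (Z.abs m) / ((1 + IZR a ^ 2) * r a * r c * r m)))).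
    2:{ intros a _. rewrite <- sumZ_R_scal. apply sumZ_R_ext. intros c _. unfold h.
        pose proof (r_pos a). pose proof (r_pos c). pose proof (r_pos m). pose proof (pow2_ge_0 (IZR a)).
        field. repeat split; lra. }
    rewrite sumZ_R_scal, Rmult_comm. apply Rmult_le_compat_r.
    - pose proof (r_pos m). pose proof (pow2_ge_0 (z m)). nra.
    - apply HK. }
  rewrite sumZ_R_scal. apply Rmult_le_compat_l; [exact HM0 | apply Ez].
Qed.

Lemma Qlow_weighted_sq_le x y z E K K' :
  l2_bounded s x E -> l2_bounded s y E -> l2_bounded s z E ->
  sumZ_R K (fun n => wt (4 * s - 1) n * Qlow x y z K' n ^ 2) <= M0 * E ^ 3.
Proof.
  intros Ex Ey Ez. pose proof (l2_bounded_nonneg _ _ _ Ex) as HE.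
  apply Rle_trans with (sumZ_R K (fun n =>
    E ^ 2 * (wt (4 * s - 1) n * sumZ_R K' (fun a => sumZ_R K' (B z n a))))).
  - apply sumZ_R_le. intros n _.
    rewrite (Rmult_comm (E ^ 2)), Rmult_assoc. apply Rmult_le_compat_l; [apply Rlt_le, wt_pos|].
    rewrite Rmult_comm. apply Qlow_sq_le; auto.
  - rewrite sumZ_R_scal. replace (M0 * E ^ 3) with (E ^ 2 * (M0 * E)) by ring.
    apply Rmult_le_compat_l; [apply pow2_ge_0 | apply weighted_B_sum_le; auto].
Qed.

Lemma Qfull_weighted_sq_le x y z E K K' :
  l2_bounded s x E -> l2_bounded s y E -> l2_bounded s z E ->
  sumZ_R K (fun n => wt (4 * s - 1) n * Qfull x y z K' n ^ 2) <= 4 * M0 * E ^ 3.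
Proof.
  intros Ex Ey Ez. pose proof Ex as [Hx _]. pose proof Ey as [Hy _]. pose proof Ez as [Hz _].
  apply Rle_trans with (sumZ_R K (fun n =>
    2 * (wt (4 * s - 1) n * Qlow x y z K' n ^ 2) +
    2 * (wt (4 * s - 1) n * Qlow x z y (K + 2 * K') n ^ 2))).
  - apply sumZ_R_le. intros n Hn.
    assert (Hsq : Qfull x y z K' n ^ 2 <=
                  2 * Qlow x y z K' n ^ 2 + 2 * Qlow x z y (K + 2 * K') n ^ 2).
    { pose proof (Qfull_le_split x y z K' n Hx Hy Hz).
      pose proof (Qhigh_le_Qlow x y z K K' n Hx Hy Hz Hn).
      assert (0 <= Qfull x y z K' n) by (apply Qsum_nonneg; auto; intros; lra).
      assert (0 <= Qlow x y z K' n) by (apply Qsum_nonneg; auto; intros; apply ind_le_bounds).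
      assert (0 <= Qhigh x y z K' n) by (apply Qsum_nonneg; auto; intros; apply ind_le_bounds).
      assert (Qfull x y z K' n <= Qlow x y z K' n + Qlow x z y (K + 2 * K') n) by lra.
      pose proof (pow2_ge_0 (Qlow x y z K' n - Qlow x z y (K + 2 * K') n)). nra. }
    pose proof (wt_pos (4 * s - 1) n). nra.
  - rewrite sumZ_R_plus, !sumZ_R_scal.
    pose proof (Qlow_weighted_sq_le x y z E K K' Ex Ey Ez).
    pose proof (Qlow_weighted_sq_le x z y E K (K + 2 * K') Ex Ez Ey). lra.
Qed.

Lemma Qfull_le_pointwise x y z E K n :
  l2_bounded s x E -> l2_bounded s y E -> l2_bounded s z E ->
  Qfull x y z K n <= 1 + 4 * M0 * E ^ 3 / wt (4 * s - 1) n.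
Proof.
  intros Ex Ey Ez. pose proof (wt_pos (4 * s - 1) n) as Hw.
  assert (Hn : wt (4 * s - 1) n * Qfull x y z K n ^ 2 <= 4 * M0 * E ^ 3).
  { eapply Rle_trans; [|apply (Qfull_weighted_sq_le x y z E (Z.abs_nat n) K Ex Ey Ez)].
    apply (sumZ_R_term_le _ _ (fun n => wt (4 * s - 1) n * Qfull x y z K n ^ 2)).
    - intros m. pose proof (wt_pos (4 * s - 1) m). pose proof (pow2_ge_0 (Qfull x y z K m)). nra.
    - unfold in_window. lia. }
  assert (Qfull x y z K n ^ 2 <= 4 * M0 * E ^ 3 / wt (4 * s - 1) n).
  { apply (Rmult_le_reg_l (wt (4 * s - 1) n)); [lra|]. unfold Rdiv.
    rewrite (Rmult_comm (4 * M0 * E ^ 3)), <- Rmult_assoc, Rinv_r, Rmult_1_l by lra. exact Hn. }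
  pose proof (pow2_ge_0 (Qfull x y z K n - 1 / 2)). nra.
Qed.

End Trilinear.

(** * The multipliers *)

Definition Cabs (z : Cplx) : R := sqrt (Cnorm2 z).

Lemma Cnorm2_nonneg z : 0 <= Cnorm2 z.
Proof. unfold Cnorm2. pose proof (pow2_ge_0 (Cre z)). pose proof (pow2_ge_0 (Cim z)). lra. Qed.

Lemma Cabs_nonneg z : 0 <= Cabs z.
Proof. apply sqrt_pos. Qed.

Lemma Cabs_sq z : Cabs z ^ 2 = Cnorm2 z.
Proof. apply pow2_sqrt, Cnorm2_nonneg. Qed.

Lemma Cnorm2_mul z w : Cnorm2 (Cmul z w) = Cnorm2 z * Cnorm2 w.
Proof. destruct z, w. unfold Cnorm2, Cmul, Cre, Cim; simpl. ring. Qed.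

Lemma Cabs_mul z w : Cabs (Cmul z w) = Cabs z * Cabs w.
Proof. unfold Cabs. rewrite Cnorm2_mul. apply sqrt_mult; apply Cnorm2_nonneg. Qed.

Lemma Cabs_add z w : Cabs (Cadd z w) <= Cabs z + Cabs w.
Proof.
  pose proof (Cabs_sq z) as Hz. pose proof (Cabs_sq w) as Hw. pose proof (Cabs_sq (Cadd z w)) as Hzw.
  pose proof (Cabs_nonneg z). pose proof (Cabs_nonneg w). pose proof (Cabs_nonneg (Cadd z w)).
  destruct z as [a b], w as [c d]. unfold Cnorm2, Cadd, Cre, Cim in *; simpl fst in *; simpl snd in *.
  set (x := Cabs (a, b)) in *. set (y := Cabs (c, d)) in *. set (u := Cabs (a + c, b + d)) in *.
  assert (Hxy : a * c + b * d <= x * y).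
  { apply Rsqr_incr_0_var; [unfold Rsqr | nra].
    pose proof (pow2_ge_0 (a * d - b * c)). replace (x * y * (x * y)) with (x ^ 2 * y ^ 2) by ring.
    rewrite Hz, Hw. nra. }
  apply Rsqr_incr_0_var; unfold Rsqr; nra.
Qed.

Lemma Cabs_expi x : Cabs (Cexpi x) = 1.
Proof.
  unfold Cabs, Cnorm2, Cexpi, Cre, Cim. cbn [fst snd].
  pose proof (sin2_cos2 x). unfold Rsqr in H.
  replace (cos x ^ 2 + sin x ^ 2) with (sin x * sin x + cos x * cos x) by ring. rewrite H. apply sqrt_1.
Qed.

Lemma Cabs_conj z : Cabs (Cconj z) = Cabs z.
Proof. unfold Cabs, Cnorm2, Cconj, Cre, Cim. cbn [fst snd]. f_equal. ring. Qed.

Lemma Rabs_Cre_le z : Rabs (Cre z) <= Cabs z.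
Proof.
  unfold Cabs, Cnorm2. rewrite <- sqrt_Rsqr_abs. apply sqrt_le_1_alt. unfold Rsqr.
  pose proof (pow2_ge_0 (Cim z)). simpl. lra.
Qed.

Lemma Rabs_Cim_le z : Rabs (Cim z) <= Cabs z.
Proof.
  unfold Cabs, Cnorm2. rewrite <- sqrt_Rsqr_abs. apply sqrt_le_1_alt. unfold Rsqr.
  pose proof (pow2_ge_0 (Cre z)). simpl. lra.
Qed.

Lemma Cre_sumZ_C K f : Cre (sumZ_C K f) = sumZ_R K (fun n => Cre (f n)).
Proof.
  unfold sumZ_C, sumZ_R. induction (2 * K + 1)%nat; simpl; auto. now rewrite <- IHn.
Qed.

Lemma Cim_sumZ_C K f : Cim (sumZ_C K f) = sumZ_R K (fun n => Cim (f n)).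
Proof.
  unfold sumZ_C, sumZ_R. induction (2 * K + 1)%nat; simpl; auto. now rewrite <- IHn.
Qed.

Lemma Cabs_sumZ_C K f : Cabs (sumZ_C K f) <= sumZ_R K (fun n => Cabs (f n)).
Proof.
  unfold sumZ_C, sumZ_R. induction (2 * K + 1)%nat; simpl.
  - unfold Cabs, Cnorm2, C0, Cre, Cim; simpl. rewrite Rmult_0_l, Rplus_0_l, sqrt_0. lra.
  - eapply Rle_trans; [apply Cabs_add | lra].
Qed.

Lemma Cnorm2_CofR x : Cnorm2 (CofR x) = x ^ 2.
Proof. unfold Cnorm2, CofR, Cre, Cim; simpl. ring. Qed.

Lemma Cnorm2_Ci : Cnorm2 Ci = 1.
Proof. unfold Cnorm2, Ci, Cre, Cim; simpl. ring. Qed.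

Lemma Cnorm2_div z w : 0 < Cnorm2 w -> Cnorm2 (Cdiv z w) = Cnorm2 z / Cnorm2 w.
Proof.
  intros H. unfold Cdiv. rewrite Cnorm2_mul. destruct w as [a b].
  unfold Cnorm2, Cinv, Cre, Cim in *; cbn [fst snd] in *.
  unfold Cnorm2, Cre, Cim; cbn [fst snd]. field. lra.
Qed.

(* [hatZ 0 = -i] is what keeps the multipliers finite at zero frequency. *)
Lemma Cnorm2_hatZ_ge k : (1 + IZR k ^ 2) / 2 <= Cnorm2 (hatZ k) /\ IZR k ^ 2 <= Cnorm2 (hatZ k).
Proof.
  unfold Cnorm2, hatZ, Cre, Cim, Defs.ind; simpl. destruct (Z.eqb_spec k 0).
  - subst. simpl. lra.
  - assert (1 <= IZR k * IZR k) by (rewrite <- mult_IZR; apply IZR_le; nia). lra.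
Qed.

Lemma multiplier_bound_nonneg n k : 0 <= 8 * IZR n ^ 2 / (1 + IZR k ^ 2).
Proof.
  pose proof (pow2_ge_0 (IZR n)). pose proof (pow2_ge_0 (IZR k)).
  apply Rmult_le_pos; [lra | apply Rlt_le, Rinv_0_lt_compat; lra].
Qed.

Lemma Cnorm2_ind_mul_le b z M : (b = true -> Cnorm2 z <= M) -> 0 <= M ->
  Cnorm2 (Cmul (CofR (Defs.ind b)) z) <= M.
Proof.
  intros H HM. rewrite Cnorm2_mul, Cnorm2_CofR. unfold Defs.ind. destruct b.
  - rewrite pow1, Rmult_1_l. auto.
  - rewrite pow_i, Rmult_0_l by lia. exact HM.
Qed.

Lemma ind_andb b1 b2 : Defs.ind b1 * Defs.ind b2 = Defs.ind (b1 && b2).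
Proof. destruct b1, b2; unfold Defs.ind; simpl; ring. Qed.

Lemma Cnorm2_two_i_div_le n k n1 n2 : (Z.abs k <= Z.abs n1)%Z ->
  Cnorm2 (Cdiv (Cmul (CofR 2) (Cmul Ci (CofR (IZR n * IZR k)))) (Cmul (hatZ n1) (hatZ n2)))
    <= 8 * IZR n ^ 2 / (1 + IZR n2 ^ 2).
Proof.
  intros Hk. destruct (Cnorm2_hatZ_ge n1) as [A1 B1]. destruct (Cnorm2_hatZ_ge n2) as [A2 B2].
  pose proof (pow2_ge_0 (IZR n1)). pose proof (pow2_ge_0 (IZR n2)). pose proof (pow2_ge_0 (IZR n)).
  rewrite Cnorm2_div by (rewrite Cnorm2_mul; nra). rewrite !Cnorm2_mul, !Cnorm2_CofR, Cnorm2_Ci.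
  assert (Hkn1 : IZR k ^ 2 <= Cnorm2 (hatZ n1)).
  { assert (IZR k ^ 2 <= IZR n1 ^ 2) by (rewrite <- !Rsqr_pow2; apply Rsqr_le_abs_1;
      rewrite !Rabs_Zabs; apply IZR_le; lia). lra. }
  set (h1 := Cnorm2 (hatZ n1)) in *. set (h2 := Cnorm2 (hatZ n2)) in *.
  assert (Hk1 : IZR k ^ 2 / h1 <= 1).
  { apply (Rmult_le_reg_r h1); [lra|]. unfold Rdiv. rewrite Rmult_assoc, Rinv_l; lra. }
  assert (Hk0 : 0 <= IZR k ^ 2 / h1)
    by (apply Rmult_le_pos; [apply pow2_ge_0 | apply Rlt_le, Rinv_0_lt_compat; lra]).
  assert (Hh2 : / h2 <= 2 / (1 + IZR n2 ^ 2)).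
  { rewrite <- Rinv_div. apply Rinv_le_contravar; [apply Rdiv_lt_0_compat|]; lra. }
  replace (2 ^ 2 * (1 * (IZR n * IZR k) ^ 2) / (h1 * h2)) with (4 * IZR n ^ 2 * (IZR k ^ 2 / h1) * / h2)
    by (field; lra).
  replace (8 * IZR n ^ 2 / (1 + IZR n2 ^ 2)) with (4 * IZR n ^ 2 * 1 * (2 / (1 + IZR n2 ^ 2)))
    by (field; lra).
  assert (0 < / h2) by (apply Rinv_0_lt_compat; lra).
  apply Rmult_le_compat; try nra.
Qed.

Lemma m1_bound n n1 n2 : Cnorm2 (m1 n n1 n2 (n - n1 - n2)) <= 8 * IZR n ^ 2 / (1 + IZR n2 ^ 2).
Proof.
  unfold m1. rewrite !ind_andb. apply Cnorm2_ind_mul_le; [|apply multiplier_bound_nonneg].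
  intros Hb. apply andb_prop in Hb as [Hb Hn3]. apply andb_prop in Hb as [Hn Hk].
  apply Z.ltb_lt in Hn, Hk. apply Cnorm2_two_i_div_le. lia.
Qed.

Lemma m2_bound n n1 n2 : Cnorm2 (m2 n n1 n2 (n - n1 - n2)) <= 8 * IZR n ^ 2 / (1 + IZR n2 ^ 2).
Proof.
  unfold m2. rewrite !ind_andb. apply Cnorm2_ind_mul_le; [|apply multiplier_bound_nonneg].
  intros Hb. apply andb_prop in Hb as [Hb Hn3]. apply andb_prop in Hb as [Hn Hk].
  apply Z.ltb_lt in Hn, Hk. apply Cnorm2_two_i_div_le. lia.
Qed.

Lemma m1t_bound n n1 n2 : Cnorm2 (m1t n n1 n2 (n - n1 - n2)) <= 8 * IZR n ^ 2 / (1 + IZR n2 ^ 2).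
Proof.
  unfold m1t. apply Cnorm2_ind_mul_le; [intros _; apply m1_bound | apply multiplier_bound_nonneg].
Qed.

Lemma m3_bound n n1 n2 n3 : Cnorm2 (m3 n n1 n2 n3) <= 8 * IZR n ^ 2 / (1 + IZR n1 ^ 2).
Proof.
  unfold m3. rewrite ind_andb. apply Cnorm2_ind_mul_le; [intros _ | apply multiplier_bound_nonneg].
  destruct (Cnorm2_hatZ_ge n1) as [A1 _].
  pose proof (pow2_ge_0 (IZR n1)). pose proof (pow2_ge_0 (IZR n)).
  rewrite Cnorm2_div by lra. rewrite !Cnorm2_mul, !Cnorm2_CofR, Cnorm2_Ci.
  apply (Rmult_le_reg_r (Cnorm2 (hatZ n1) * (1 + IZR n1 ^ 2))); [nra|].
  field_simplify; [nra | lra | lra].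
Qed.

Lemma Cabs_le_of_Cnorm2_le z n k : Cnorm2 z <= 8 * IZR n ^ 2 / (1 + IZR k ^ 2) ->
  Cabs z <= sqrt 8 * Rabs (IZR n) / jbr k.
Proof.
  intros H. pose proof (jbr_pos k). pose proof (sqrt_pos 8). pose proof (Rabs_pos (IZR n)).
  assert (HR : 0 <= sqrt 8 * Rabs (IZR n) / jbr k)
    by (apply Rmult_le_pos; [nra | apply Rlt_le, Rinv_0_lt_compat; lra]).
  assert (Hsq : (sqrt 8 * Rabs (IZR n) / jbr k) ^ 2 = 8 * IZR n ^ 2 / (1 + IZR k ^ 2)).
  { rewrite <- jbr_sq. unfold Rdiv. rewrite !Rpow_mult_distr, pow2_sqrt, pow2_abs, pow_inv by lra.
    ring. }
  unfold Cabs. rewrite <- (sqrt_pow2 _ HR). apply sqrt_le_1_alt. lra.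
Qed.

Lemma Nterm_bound w t n n1 n2 :
  Cabs (Nterm w t n n1 n2) <= sqrt 8 * Rabs (IZR n) *
   (Cabs (w n1) * Cabs (w n2) * Cabs (w (- (n - n1 - n2))%Z) / jbr n2 +
    Cabs (w n1) * Cabs (w (- n2)%Z) * Cabs (w (n - n1 - n2)%Z) / jbr n2 +
    Cabs (w (- n1)%Z) * Cabs (w n2) * Cabs (w (n - n1 - n2)%Z) / jbr n1).
Proof.
  unfold Nterm. cbv zeta. rewrite Cabs_mul, Cabs_expi, Rmult_1_l.
  eapply Rle_trans; [apply Cabs_add|]. eapply Rle_trans; [apply Rplus_le_compat_l, Cabs_add|].
  unfold star. rewrite !Cabs_mul, !Cabs_conj.
  pose proof (Cabs_le_of_Cnorm2_le _ _ _ (m1t_bound n n1 n2)).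
  pose proof (Cabs_le_of_Cnorm2_le _ _ _ (m2_bound n n1 n2)).
  pose proof (Cabs_le_of_Cnorm2_le _ _ _ (m3_bound n n1 n2 (n - n1 - n2))).
  set (a1 := Cabs (w n1)). set (a2 := Cabs (w n2)). set (a3 := Cabs (w (n - n1 - n2)%Z)).
  set (c1 := Cabs (w (- n1)%Z)). set (c2 := Cabs (w (- n2)%Z)).
  set (c3 := Cabs (w (- (n - n1 - n2))%Z)).
  assert (0 <= a1 * (a2 * c3)) by (repeat apply Rmult_le_pos; apply Cabs_nonneg).
  assert (0 <= a1 * (c2 * a3)) by (repeat apply Rmult_le_pos; apply Cabs_nonneg).
  assert (0 <= c1 * (a2 * a3)) by (repeat apply Rmult_le_pos; apply Cabs_nonneg).
  unfold Rdiv in *.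
  apply Rmult_le_compat_r with (r := a1 * (a2 * c3)) in H; auto.
  apply Rmult_le_compat_r with (r := a1 * (c2 * a3)) in H0; auto.
  apply Rmult_le_compat_r with (r := c1 * (a2 * a3)) in H1; auto.
  lra.
Qed.

(** * Square partial sums *)

Definition sumZ2 (f : Z -> Z -> R) (K : nat) : R := sumZ_R K (fun a => sumZ_R K (f a)).

Lemma sumZ2_le f g K : (forall a c, f a c <= g a c) -> sumZ2 f K <= sumZ2 g K.
Proof. intros. apply sumZ_R_le. intros. apply sumZ_R_le. auto. Qed.

Lemma sumZ2_le_window f K1 K2 : (forall a c, 0 <= f a c) -> (K1 <= K2)%nat ->
  sumZ2 f K1 <= sumZ2 f K2.
Proof.
  intros Hf H. unfold sumZ2. apply Rle_trans with (sumZ_R K1 (fun a => sumZ_R K2 (f a))).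
  - apply sumZ_R_le. intros. apply sumZ_R_le_window; auto.
  - apply sumZ_R_le_window; auto. intros; apply sumZ_R_nonneg; auto.
Qed.

Lemma sumZ2_plus f g K : sumZ2 (fun a c => f a c + g a c) K = sumZ2 f K + sumZ2 g K.
Proof. unfold sumZ2. rewrite <- sumZ_R_plus. apply sumZ_R_ext. intros. apply sumZ_R_plus. Qed.

Lemma sumZ2_scal k f K : sumZ2 (fun a c => k * f a c) K = k * sumZ2 f K.
Proof. unfold sumZ2. rewrite <- sumZ_R_scal. apply sumZ_R_ext. intros. apply sumZ_R_scal. Qed.

Lemma sumZ2_abs f K : Rabs (sumZ2 f K) <= sumZ2 (fun a c => Rabs (f a c)) K.
Proof.
  unfold sumZ2. eapply Rle_trans; [apply sumZ_R_abs|]. apply sumZ_R_le. intros. apply sumZ_R_abs.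
Qed.

Definition window_ind (K : nat) (a c : Z) : R :=
  ind_le (Z.abs a) (Z.of_nat K) * ind_le (Z.abs c) (Z.of_nat K).

Lemma window_ind_bounds K a c : 0 <= window_ind K a c <= 1.
Proof.
  unfold window_ind. pose proof (ind_le_bounds (Z.abs a) (Z.of_nat K)).
  pose proof (ind_le_bounds (Z.abs c) (Z.of_nat K)). nra.
Qed.

Lemma sumZ2_window_ind f K1 K2 : (K1 <= K2)%nat ->
  sumZ2 (fun a c => f a c * window_ind K1 a c) K2 = sumZ2 f K1.
Proof.
  intros H. unfold sumZ2. rewrite <- (sumZ_R_cutoff K1 K2) by auto. apply sumZ_R_ext. intros a _.
  rewrite <- (sumZ_R_cutoff K1 K2 (f a)) by auto. rewrite Rmult_comm, <- sumZ_R_scal.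
  apply sumZ_R_ext. intros. unfold window_ind. ring.
Qed.

(* The increment between two square windows is the sum over the difference of the squares. *)
Lemma sumZ2_increment_le g h K1 K2 : (forall a c, Rabs (g a c) <= h a c) -> (K1 <= K2)%nat ->
  Rabs (sumZ2 g K2 - sumZ2 g K1) <= sumZ2 h K2 - sumZ2 h K1.
Proof.
  intros Hg H. rewrite <- !(sumZ2_window_ind _ K1 K2) by auto.
  assert (Hdiff : forall f, sumZ2 f K2 - sumZ2 (fun a c => f a c * window_ind K1 a c) K2 =
                            sumZ2 (fun a c => f a c * (1 - window_ind K1 a c)) K2).
  { intros f. replace (sumZ2 f K2 - sumZ2 (fun a c => f a c * window_ind K1 a c) K2)
      with (sumZ2 f K2 + -1 * sumZ2 (fun a c => f a c * window_ind K1 a c) K2) by ring.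
    rewrite <- sumZ2_scal, <- sumZ2_plus. apply sumZ_R_ext. intros. apply sumZ_R_ext. intros. ring. }
  rewrite !Hdiff. eapply Rle_trans; [apply sumZ2_abs|]. apply sumZ2_le. intros a c.
  pose proof (window_ind_bounds K1 a c). rewrite Rabs_mult, (Rabs_right (1 - _)) by lra.
  apply Rmult_le_compat_r; [lra | apply Hg].
Qed.

Lemma cv_of_dominated_increments u H : (exists l, Un_cv H l) ->
  (forall K1 K2, (K1 <= K2)%nat -> Rabs (u K2 - u K1) <= H K2 - H K1) -> exists l, Un_cv u l.
Proof.
  intros [l Hl] Hd.
  assert (Cu : Cauchy_crit u).
  { intros eps He. destruct (CV_Cauchy H (exist _ l Hl) eps He) as [N HN]. exists N.
    intros a b Ha Hb. unfold Rdist in *. specialize (HN a b Ha Hb).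
    destruct (le_lt_dec a b).
    - pose proof (Hd a b l0). rewrite Rabs_minus_sym. rewrite Rabs_minus_sym in HN.
      pose proof (Rle_abs (H b - H a)). lra.
    - pose proof (Hd b a ltac:(lia)). pose proof (Rle_abs (H a - H b)). lra. }
  destruct (R_complete u Cu) as [l' Hl']. exists l'; auto.
Qed.

Lemma cv_const c : Un_cv (fun _ => c) c.
Proof. intros eps He. exists 0%nat. intros. unfold Rdist. rewrite Rminus_diag, Rabs_R0. auto. Qed.

Lemma cv_le_bound u l B : Un_cv u l -> (forall k, u k <= B) -> l <= B.
Proof. intros Hu HB. exact (Rle_cv_lim HB Hu (cv_const B)). Qed.

Lemma cv_sumZ_R K (u : nat -> Z -> R) l : (forall n, Un_cv (fun k => u k n) (l n)) ->
  Un_cv (fun k => sumZ_R K (u k)) (sumZ_R K l).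
Proof.
  intros H. unfold sumZ_R. induction (2 * K + 1)%nat; simpl; [apply cv_const | apply CV_plus; auto].
Qed.

Lemma cv_Cnorm2 u v : Ccv u v -> Un_cv (fun k => Cnorm2 (u k)) (Cnorm2 v).
Proof.
  intros [H1 H2]. unfold Cnorm2. simpl.
  apply (CV_plus _ _ _ _ (CV_mult _ _ _ _ H1 (CV_mult _ _ _ _ H1 (cv_const 1)))
                         (CV_mult _ _ _ _ H2 (CV_mult _ _ _ _ H2 (cv_const 1)))).
Qed.

(** * The estimate for [N] *)

Lemma l2sq_partial_growing s w : Un_growing (l2sq_partial s w).
Proof.
  intros K. unfold l2sq_partial. rewrite sumZ_R_S.
  pose proof (wt_pos (2 * s) (- Z.of_nat (S K))). pose proof (wt_pos (2 * s) (Z.of_nat (S K))).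
  pose proof (Cnorm2_nonneg (w (- Z.of_nat (S K))%Z)). pose proof (Cnorm2_nonneg (w (Z.of_nat (S K)))).
  unfold wt in *. nra.
Qed.

Lemma l2sq_partial_nonneg s w K : 0 <= l2sq_partial s w K.
Proof.
  apply sumZ_R_nonneg. intros n. pose proof (wt_pos (2 * s) n). pose proof (Cnorm2_nonneg (w n)).
  unfold wt in *. nra.
Qed.

Definition cabs_seq (w : Z -> Cplx) (k : Z) : R := Cabs (w k).
Definition cabs_seq_opp (w : Z -> Cplx) (k : Z) : R := Cabs (w (- k)%Z).

Lemma l2_bounded_cabs_seq s w L : (forall K, l2sq_partial s w K <= L) -> l2_bounded s (cabs_seq w) L.
Proof.
  intros H. split; [intros; apply Cabs_nonneg|]. intros K. eapply Rle_trans; [|apply (H K)].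
  right. apply sumZ_R_ext. intros. unfold cabs_seq. now rewrite Cabs_sq.
Qed.

Lemma l2_bounded_cabs_seq_opp s w L : (forall K, l2sq_partial s w K <= L) ->
  l2_bounded s (cabs_seq_opp w) L.
Proof.
  intros H. split; [intros; apply Cabs_nonneg|]. intros K. eapply Rle_trans; [|apply (H K)].
  right. unfold l2sq_partial. rewrite <- (sumZ_R_opp K (fun n => Rpower (jbr n) (2 * s) * Cnorm2 (w n))).
  apply sumZ_R_ext. intros n _. unfold cabs_seq_opp, wt. now rewrite Cabs_sq, jbr_opp.
Qed.

(* The three terms of [Nterm] give two trilinear sums, after relabelling [n1 <-> n2] in the first two. *)
Lemma Nterm_abs_sum_le w t n K :
  sumZ2 (fun n1 n2 => Cabs (Nterm w t n n1 n2)) K <=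
  sqrt 8 * Rabs (IZR n) *
    (Qfull (cabs_seq w) (cabs_seq w) (cabs_seq_opp w) K n +
     2 * Qfull (cabs_seq_opp w) (cabs_seq w) (cabs_seq w) K n).
Proof.
  eapply Rle_trans; [apply sumZ2_le; intros n1 n2; apply Nterm_bound|].
  rewrite sumZ2_scal, !sumZ2_plus. apply Req_le. f_equal.
  assert (E1 : sumZ2 (fun n1 n2 => Cabs (w n1) * Cabs (w n2) * Cabs (w (- (n - n1 - n2))%Z) / jbr n2) K
               = Qfull (cabs_seq w) (cabs_seq w) (cabs_seq_opp w) K n).
  { unfold sumZ2, Qfull, Qsum. rewrite sumZ_R_swap. apply sumZ_R_ext. intros a _.
    apply sumZ_R_ext. intros c _. unfold cabs_seq, cabs_seq_opp.
    replace (n - c - a)%Z with (n - a - c)%Z by ring. unfold Rdiv. ring. }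
  assert (E2 : sumZ2 (fun n1 n2 => Cabs (w n1) * Cabs (w (- n2)%Z) * Cabs (w (n - n1 - n2)%Z) / jbr n2) K
               = Qfull (cabs_seq_opp w) (cabs_seq w) (cabs_seq w) K n).
  { unfold sumZ2, Qfull, Qsum. rewrite sumZ_R_swap. apply sumZ_R_ext. intros a _.
    apply sumZ_R_ext. intros c _. unfold cabs_seq, cabs_seq_opp.
    replace (n - c - a)%Z with (n - a - c)%Z by ring. unfold Rdiv. ring. }
  assert (E3 : sumZ2 (fun n1 n2 => Cabs (w (- n1)%Z) * Cabs (w n2) * Cabs (w (n - n1 - n2)%Z) / jbr n1) K
               = Qfull (cabs_seq_opp w) (cabs_seq w) (cabs_seq w) K n).
  { apply sumZ_R_ext. intros a _. apply sumZ_R_ext. intros c _. unfold cabs_seq, cabs_seq_opp.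
    unfold Rdiv. ring. }
  rewrite E1, E2, E3. ring.
Qed.

Lemma Cre_Npartial w t n K : Cre (Npartial w t n K) = sumZ2 (fun n1 n2 => Cre (Nterm w t n n1 n2)) K.
Proof. unfold Npartial, sumZ2. rewrite Cre_sumZ_C. apply sumZ_R_ext. intros. apply Cre_sumZ_C. Qed.

Lemma Cim_Npartial w t n K : Cim (Npartial w t n K) = sumZ2 (fun n1 n2 => Cim (Nterm w t n n1 n2)) K.
Proof. unfold Npartial, sumZ2. rewrite Cim_sumZ_C. apply sumZ_R_ext. intros. apply Cim_sumZ_C. Qed.

Lemma Cabs_Npartial_le w t n K :
  Cabs (Npartial w t n K) <= sumZ2 (fun n1 n2 => Cabs (Nterm w t n n1 n2)) K.
Proof.
  unfold Npartial, sumZ2. eapply Rle_trans; [apply Cabs_sumZ_C|]. apply sumZ_R_le. intros.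
  apply Cabs_sumZ_C.
Qed.

Section Estimate.

Variable s : R.
Variable M0 : R.
Hypothesis HM0 : 0 <= M0.
Hypothesis HK : kernel_bounded s M0.
Variable w : Z -> Cplx.
Variable L : R.
Hypothesis HL : forall K, l2sq_partial s w K <= L.

Let Eb := l2_bounded_cabs_seq s w L HL.
Let Eb' := l2_bounded_cabs_seq_opp s w L HL.

Lemma Npartial_converges t n : exists v, Nval w t n v.
Proof.
  set (Bn := 1 + 4 * M0 * L ^ 3 / wt (4 * s - 1) n).
  set (H := sumZ2 (fun n1 n2 => Cabs (Nterm w t n n1 n2))).
  assert (HB : forall K, H K <= sqrt 8 * Rabs (IZR n) * (Bn + 2 * Bn)).
  { intros K. eapply Rle_trans; [apply Nterm_abs_sum_le|]. apply Rmult_le_compat_l.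
    - pose proof (sqrt_pos 8). pose proof (Rabs_pos (IZR n)). nra.
    - pose proof (Qfull_le_pointwise s M0 HM0 HK _ _ _ L K n Eb Eb Eb') as H1.
      pose proof (Qfull_le_pointwise s M0 HM0 HK _ _ _ L K n Eb' Eb Eb) as H2.
      fold Bn in H1, H2. lra. }
  assert (Hg : Un_growing H)
    by (intros K; apply sumZ2_le_window; [intros; apply Cabs_nonneg | lia]).
  destruct (growing_cv H Hg) as [lH HlH].
  { exists (sqrt 8 * Rabs (IZR n) * (Bn + 2 * Bn)). intros x [K ->]. apply HB. }
  destruct (cv_of_dominated_increments (fun K => Cre (Npartial w t n K)) H) as [lr Hr].
  { exists lH; auto. }
  { intros K1 K2 HK12. rewrite !Cre_Npartial. apply sumZ2_increment_le; auto.
    intros; apply Rabs_Cre_le. }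
  destruct (cv_of_dominated_increments (fun K => Cim (Npartial w t n K)) H) as [li Hi].
  { exists lH; auto. }
  { intros K1 K2 HK12. rewrite !Cim_Npartial. apply sumZ2_increment_le; auto.
    intros; apply Rabs_Cim_le. }
  exists (lr, li). split; auto.
Qed.

(* [<n>^(2β) n^2 <= <n>^(4s-1)] is where the derivative loss in the multipliers is absorbed. *)
Lemma Npartial_weighted_le t n K :
  wt (2 * (2 * s - 3 / 2)) n * Cnorm2 (Npartial w t n K) <=
  64 * (wt (4 * s - 1) n * Qfull (cabs_seq w) (cabs_seq w) (cabs_seq_opp w) K n ^ 2) +
  64 * (wt (4 * s - 1) n * Qfull (cabs_seq_opp w) (cabs_seq w) (cabs_seq w) K n ^ 2).
Proof.
  set (Q1 := Qfull (cabs_seq w) (cabs_seq w) (cabs_seq_opp w) K n).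
  set (Q2 := Qfull (cabs_seq_opp w) (cabs_seq w) (cabs_seq w) K n).
  assert (HQ1 : 0 <= Q1) by (apply Qsum_nonneg; intros; try lra; apply Cabs_nonneg).
  assert (HQ2 : 0 <= Q2) by (apply Qsum_nonneg; intros; try lra; apply Cabs_nonneg).
  assert (Hab : Cabs (Npartial w t n K) <= sqrt 8 * Rabs (IZR n) * (Q1 + 2 * Q2))
    by (eapply Rle_trans; [apply Cabs_Npartial_le | apply Nterm_abs_sum_le]).
  assert (Hn2 : Cnorm2 (Npartial w t n K) <= IZR n ^ 2 * (16 * Q1 ^ 2 + 64 * Q2 ^ 2)).
  { rewrite <- Cabs_sq. pose proof (Cabs_nonneg (Npartial w t n K)).
    apply Rle_trans with ((sqrt 8 * Rabs (IZR n) * (Q1 + 2 * Q2)) ^ 2); [apply pow_incr; lra|].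
    rewrite !Rpow_mult_distr, pow2_sqrt, pow2_abs by lra.
    pose proof (pow2_ge_0 (Q1 - 2 * Q2)). pose proof (pow2_ge_0 (IZR n)).
    replace (8 * IZR n ^ 2 * (Q1 + 2 * Q2) ^ 2) with (IZR n ^ 2 * (8 * (Q1 + 2 * Q2) ^ 2)) by ring.
    apply Rmult_le_compat_l; nra. }
  assert (Hw : wt (2 * (2 * s - 3 / 2)) n * IZR n ^ 2 <= wt (4 * s - 1) n).
  { replace (4 * s - 1) with (2 * (2 * s - 3 / 2) + 2) by lra. rewrite wt_plus, wt_2.
    apply Rmult_le_compat_l; [apply Rlt_le, wt_pos | lra]. }
  pose proof (wt_pos (2 * (2 * s - 3 / 2)) n). pose proof (wt_pos (4 * s - 1) n).
  pose proof (pow2_ge_0 Q1). pose proof (pow2_ge_0 Q2).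
  apply Rle_trans with (wt (2 * (2 * s - 3 / 2)) n * IZR n ^ 2 * (16 * Q1 ^ 2 + 64 * Q2 ^ 2)).
  - rewrite Rmult_assoc. apply Rmult_le_compat_l; lra.
  - apply Rle_trans with (wt (4 * s - 1) n * (16 * Q1 ^ 2 + 64 * Q2 ^ 2));
      [apply Rmult_le_compat_r|]; nra.
Qed.

Lemma Npartial_weighted_sum_le t K K' :
  sumZ_R K (fun n => wt (2 * (2 * s - 3 / 2)) n * Cnorm2 (Npartial w t n K')) <= 512 * M0 * L ^ 3.
Proof.
  eapply Rle_trans; [apply sumZ_R_le; intros n _; apply Npartial_weighted_le|].
  rewrite sumZ_R_plus, !sumZ_R_scal.
  pose proof (Qfull_weighted_sq_le s M0 HM0 HK _ _ _ L K K' Eb Eb Eb').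
  pose proof (Qfull_weighted_sq_le s M0 HM0 HK _ _ _ L K K' Eb' Eb Eb). lra.
Qed.

Lemma N_l2_bound t Nw : (forall n, Nval w t n (Nw n)) ->
  exists LN, l2sq_is (2 * s - 3 / 2) Nw LN /\ LN <= 512 * M0 * L ^ 3.
Proof.
  intros HN.
  assert (HK' : forall K, l2sq_partial (2 * s - 3 / 2) Nw K <= 512 * M0 * L ^ 3).
  { intros K. apply (cv_le_bound (fun K' => sumZ_R K (fun n =>
      wt (2 * (2 * s - 3 / 2)) n * Cnorm2 (Npartial w t n K')))).
    - apply (cv_sumZ_R K (fun K' n => wt (2 * (2 * s - 3 / 2)) n * Cnorm2 (Npartial w t n K'))
               (fun n => wt (2 * (2 * s - 3 / 2)) n * Cnorm2 (Nw n))).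
      intros n. apply CV_mult; [apply cv_const | apply cv_Cnorm2, HN].
    - apply Npartial_weighted_sum_le. }
  destruct (growing_cv _ (l2sq_partial_growing (2 * s - 3 / 2) Nw)) as [LN HLN].
  { exists (512 * M0 * L ^ 3). intros x [K ->]. apply HK'. }
  exists LN. split; [exact HLN | apply (cv_le_bound _ _ _ HLN HK')].
Qed.

End Estimate.

Theorem mainTheorem5 (s : R) (hs0 : 0 < s) (hs1 : s < 1 / 2) :
  exists C : R, 0 < C /\
  forall (T : R) (omega : R -> Z -> Cplx),
    0 < T ->
    (forall t, 0 <= t <= T -> in_l2 s (omega t)) ->
    (forall t, 0 <= t <= T -> forall eps, 0 < eps ->
       exists delta, 0 < delta /\
       forall t', 0 <= t' <= T -> Rabs (t' - t) < delta ->
         forall K, l2sq_partial s (fun n => Csub (omega t' n) (omega t n)) K <= eps ^ 2) ->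
    forall t, 0 <= t <= T ->
      (forall n, exists v, Nval (omega t) t n v) /\
      (forall (Nw : Z -> Cplx) (L : R),
         (forall n, Nval (omega t) t n (Nw n)) ->
         l2sq_is s (omega t) L ->
         exists LN, l2sq_is (2 * s - 3 / 2) Nw LN /\
                    sqrt LN <= C * sqrt L ^ 3).
Proof.
  assert (Hs : 0 < s < 1 / 2) by lra.
  destruct (kernel_bound s Hs) as [M0 [HM0 HK]].
  exists (sqrt (512 * M0)). split; [apply sqrt_lt_R0; lra|].
  intros T omega _ Hl2 _ t Ht.
  assert (Hpartial : forall L, l2sq_is s (omega t) L -> forall K, l2sq_partial s (omega t) K <= L)
    by (intros L HL K; apply growing_ineq; [apply l2sq_partial_growing | exact HL]).
  split.
  - destruct (Hl2 t Ht) as [L HL].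
    apply (Npartial_converges s M0 (Rlt_le _ _ HM0) HK _ L (Hpartial L HL)).
  - intros Nw L HN HL.
    destruct (N_l2_bound s M0 (Rlt_le _ _ HM0) HK _ L (Hpartial L HL) t Nw HN) as [LN [HLN HLNb]].
    exists LN. split; [exact HLN|].
    assert (HL0 : 0 <= L)
      by (pose proof (l2sq_partial_nonneg s (omega t) 0); pose proof (Hpartial L HL 0%nat); lra).
    eapply Rle_trans; [apply sqrt_le_1_alt, HLNb|].
    rewrite sqrt_mult by (try lra; apply pow_le; lra).
    apply Req_le. f_equal. rewrite <- (sqrt_pow2 (sqrt L ^ 3)) by (apply pow_le, sqrt_pos).
    f_equal. replace ((sqrt L ^ 3) ^ 2) with ((sqrt L ^ 2) ^ 3) by ring.
    now rewrite pow2_sqrt by lra.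
Qed.
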